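(* For every $1<p<\infty$ there exists a curve $\Gamma$ in $\ell_p$ such that $\mathcal{H}^1(\Gamma)<\infty$ and $S_{\Gamma,p-\epsilon}(\mathscr{G})=\infty$ for every multiresolution family $\mathscr{G}$ for $\Gamma$ (of any inflation factor $>1$) and every $\epsilon\in(0,p)$.
   Context: $\ell_p$ is the real Banach space of $p$-summable sequences with norm $|x|_p=(\sum_i|x_i|^p)^{1/p}$; $\mathcal{H}^1$ is computed with respect to this norm. For a nonempty set $E\subset\ell_p$ and a set $Q$ of positive diameter, the Jones beta number is $\beta_E(Q)=\inf_L\sup_{x\in E\cap Q}\mathrm{dist}(x,L)/\mathrm{diam}\,Q$ if $E\cap Q\neq\emptyset$, where $L$ ranges over all one-dimensional affine subspaces (lines), and $\beta_E(Q)=0$ if $E\cap Q=\emptyset$. For $\rho>0$, a $\rho$-net for $E$ is a set $X\subset E$ such that $|y-z|\geq\rho$ for all distinct $y,z\in X$ and $\mathrm{dist}(x,X)<\rho$ for all $x\in E$. A multiresolution family for $E$ with inflation factor $A>1$ is the collection of closed balls $\mathscr{G}=\{B(x,A2^{-k}):x\in X_k,\ k\in\mathbb{Z}\}$ (indexed by the pairs $(k,x)$), where $(X_k)_{k\in\mathbb{Z}}$ is a nested family ($X_k\subset X_{k+1}$) and each $X_k$ is a $2^{-k}$-net for $E$. For $0<r<\infty$, $S_{E,r}(\mathscr{G})=\mathrm{diam}\,E+\sum_{Q\in\mathscr{G}}\beta_E(Q)^r\,\mathrm{diam}\,Q$. A curve is the image of a continuous map from $[0,1]$. *)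

From Stdlib Require Import Reals Lra ZArith List Classical ClassicalEpsilon FunctionalExtensionality.
Open Scope R_scope.

Inductive ER : Type := Fin (r : R) | PInf.

Definition er_le (a b : ER) : Prop :=
  match a, b with
  | Fin x, Fin y => x <= y
  | _, PInf => True
  | PInf, Fin _ => False
  end.
Definition er_lt (a b : ER) : Prop :=
  match a, b with
  | Fin x, Fin y => x < y
  | Fin _, PInf => True
  | PInf, _ => False
  end.
Definition er_add (a b : ER) : ER :=
  match a, b with
  | Fin x, Fin y => Fin (x + y)
  | _, _ => PInf
  end.
(* real part; only applied to values that are finite *)
Definition er_real (a : ER) : R := match a with Fin x => x | PInf => 0 end.

(** Supremum of a set of extended reals (sup of the empty set is 0; all uses
    are for sets of nonnegative quantities). *)
Definition esup (S : ER -> Prop) : ER :=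
  if excluded_middle_informative (S PInf) then PInf else
  if excluded_middle_informative
       ((exists r, S (Fin r)) /\ bound (fun r => S (Fin r)))
  then Fin (epsilon (inhabits 0) (fun m => is_lub (fun r => S (Fin r)) m))
  else if excluded_middle_informative (exists r, S (Fin r)) then PInf
  else Fin 0.

(** Infimum of a set of extended reals (inf of the empty set is +infinity;
    all uses are for sets of nonnegative quantities, bounded below by 0). *)
Definition einf (S : ER -> Prop) : ER :=
  if excluded_middle_informative (exists r, S (Fin r))
  then Fin (- epsilon (inhabits 0) (fun m => is_lub (fun r => S (Fin (- r))) m))
  else PInf.

Definition einfR (S : R -> Prop) : ER := einf (fun e => exists r, S r /\ e = Fin r).

Definition esum {I : Type} (P : I -> Prop) (f : I -> ER) : ER :=
  esup (fun e => exists l : list I, NoDup l /\ Forall P l /\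
                   e = fold_right er_add (Fin 0) (map f l)).

Definition seqR := nat -> R.

(* x^a for x >= 0 (with 0^a = 0, used only for a > 0) *)
Definition rpow (x a : R) : R := if Rlt_dec 0 x then Rpower x a else 0.

Definition sumR (f : nat -> R) : R := epsilon (inhabits 0) (fun l => infinite_sum f l).

Definition in_lp (p : R) (x : seqR) : Prop :=
  exists l, infinite_sum (fun i => rpow (Rabs (x i)) p) l.

Definition lpnorm (p : R) (x : seqR) : R :=
  rpow (sumR (fun i => rpow (Rabs (x i)) p)) (/ p).

Definition vadd (x y : seqR) : seqR := fun i => x i + y i.
Definition vsub (x y : seqR) : seqR := fun i => x i - y i.
Definition vscale (t : R) (x : seqR) : seqR := fun i => t * x i.
Definition vzero : seqR := fun _ => 0.

Definition ldist (p : R) (x y : seqR) : R := lpnorm p (vsub x y).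

Definition diam (p : R) (E : seqR -> Prop) : ER :=
  esup (fun e => exists x y, E x /\ E y /\ e = Fin (ldist p x y)).

Definition dist_set (p : R) (x : seqR) (S : seqR -> Prop) : ER :=
  einfR (fun r => exists y, S y /\ r = ldist p x y).

Definition is_line (p : R) (L : seqR -> Prop) : Prop :=
  exists a v, in_lp p a /\ in_lp p v /\ v <> vzero /\
    forall y, L y <-> exists t, y = vadd a (vscale t v).

Definition beta (p : R) (E Q : seqR -> Prop) : R :=
  if excluded_middle_informative (exists x, E x /\ Q x) then
    er_real (einfR (fun b => exists L, is_line p L /\
      b = er_real (esup (fun e => exists x, E x /\ Q x /\
                                   e = Fin (er_real (dist_set p x L))))
          / er_real (diam p Q)))
  else 0.

Definition cball (p : R) (c : seqR) (r : R) : seqR -> Prop :=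
  fun y => in_lp p y /\ ldist p y c <= r.

Definition is_net (p : R) (E : seqR -> Prop) (rho : R) (X : seqR -> Prop) : Prop :=
  (forall x, X x -> E x) /\
  (forall y z, X y -> X z -> y <> z -> rho <= ldist p y z) /\
  (forall x, E x -> er_lt (dist_set p x X) (Fin rho)).

(** multiresolution family data: inflation factor A and nested nets X_k *)
Definition is_MRF (p : R) (E : seqR -> Prop) (A : R) (X : Z -> seqR -> Prop) : Prop :=
  1 < A /\
  (forall k x, X k x -> X (k + 1)%Z x) /\
  (forall k, is_net p E (powerRZ 2 (- k)) (X k)).

(** S_{E,r}(G) for the family G = {B(x, A 2^-k) : x in X_k, k in Z},
    indexed by the pairs (k,x) *)
Definition S_val (p : R) (E : seqR -> Prop) (r A : R) (X : Z -> seqR -> Prop) : ER :=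
  er_add (diam p E)
    (esum (fun kx : Z * seqR => X (fst kx) (snd kx))
          (fun kx => let Q := cball p (snd kx) (A * powerRZ 2 (- fst kx)) in
                     Fin (rpow (beta p E Q) r * er_real (diam p Q)))).

(** one-dimensional Hausdorff measure (unnormalized; normalization does not
    affect finiteness) *)
Definition H1_delta (p : R) (E : seqR -> Prop) (delta : R) : ER :=
  einf (fun e => exists U : nat -> seqR -> Prop,
          (forall n y, U n y -> in_lp p y) /\
          (forall x, E x -> exists n, U n x) /\
          (forall n, er_le (diam p (U n)) (Fin delta)) /\
          e = esum (fun _ : nat => True) (fun n => diam p (U n))).

Definition H1 (p : R) (E : seqR -> Prop) : ER :=
  esup (fun e => exists delta, 0 < delta /\ e = H1_delta p E delta).

Definition is_curve_param (p : R) (g : R -> seqR) : Prop :=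
  (forall t, 0 <= t <= 1 -> in_lp p (g t)) /\
  (forall t, 0 <= t <= 1 -> forall eps, 0 < eps ->
     exists d, 0 < d /\ forall s, 0 <= s <= 1 -> Rabs (s - t) < d ->
       ldist p (g s) (g t) < eps).

Definition image01 (g : R -> seqR) : seqR -> Prop :=
  fun y => exists t, 0 <= t <= 1 /\ y = g t.

(* The curve is t |-> (t, a_1 f_1(t), a_2 f_2(t), ...) with f_i(t) = |sin(PI 2^i t)| / (PI 2^i)
   and a_i = b_i^(1/p), where sum b_i < oo.  Each f_i is 1-Lipschitz and sum a_i^p < oo, so the
   parametrization is 2-Lipschitz into l_p and the curve has finite length.  In a ball of radius
   A 2^-k centred on the curve, the oscillation of index k+2 produces three points at consecutive
   dyadic parameters which no line approximates within a_(k+2) 2^-k / 16 PI, whence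
   beta >= a_(k+2) / (64 PI A).  A 2^-k-net contains at least 2^(k-1) points with parameters
   2^(1-k) apart, so level k contributes at least (A/2) (a_(k+2) / (64 PI A))^r to S_r.  With
   b_i comparable to 1 / (2^L L^2) on the block 2^L <= i < 2^(L+1), one block of levels
   contributes a multiple of 2^L (2^L L^2)^(-r/p), unbounded in L as soon as r < p. *)

From Stdlib Require Import Reals ZArith.
From Stdlib Require Import Lra Lia List Classical ClassicalEpsilon FunctionalExtensionality.
Open Scope R_scope.

Lemma esup_finite (S : ER -> Prop) :
  ~ S PInf -> (exists r, S (Fin r)) -> bound (fun r => S (Fin r)) ->
  exists m, esup S = Fin m /\ is_lub (fun r => S (Fin r)) m.
Proof.
  intros H1 H2 H3. unfold esup.
  destruct (excluded_middle_informative (S PInf)) as [h|h]; [contradiction|].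
  destruct (excluded_middle_informative
       ((exists r, S (Fin r)) /\ bound (fun r => S (Fin r)))) as [h'|h'].
  - eexists; split; [reflexivity|].
    apply epsilon_spec. destruct (completeness _ H3 H2) as [m Hm]. exists m; exact Hm.
  - exfalso; apply h'; split; assumption.
Qed.

Lemma esup_unbounded (S : ER -> Prop) :
  (exists r, S (Fin r)) -> ~ bound (fun r => S (Fin r)) -> esup S = PInf.
Proof.
  intros H2 H3. unfold esup.
  destruct (excluded_middle_informative (S PInf)) as [h|h]; [reflexivity|].
  destruct (excluded_middle_informative
       ((exists r, S (Fin r)) /\ bound (fun r => S (Fin r)))) as [h'|h'].
  - destruct h'; contradiction.
  - destruct (excluded_middle_informative (exists r, S (Fin r))); [reflexivity|contradiction].
Qed.

Lemma esup_upper_bound (S : ER -> Prop) d r : esup S = Fin d -> S (Fin r) -> r <= d.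
Proof.
  intros He Hr. unfold esup in He.
  destruct (excluded_middle_informative (S PInf)) as [h|h]; [discriminate|].
  destruct (excluded_middle_informative
       ((exists r, S (Fin r)) /\ bound (fun r => S (Fin r)))) as [h'|h'].
  - injection He as <-. destruct h' as [hn hb].
    assert (Hl: exists m, is_lub (fun r => S (Fin r)) m).
    { destruct (completeness _ hb hn) as [m Hm]; exists m; exact Hm. }
    pose proof (epsilon_spec (inhabits 0) _ Hl) as [Hu _]. apply Hu; exact Hr.
  - destruct (excluded_middle_informative (exists r, S (Fin r))) as [_|hn]; [discriminate|].
    exfalso; apply hn; exists r; exact Hr.
Qed.

Lemma esup_ge0 (S : ER -> Prop) x : S (Fin 0) -> esup S = Fin x -> 0 <= x.
Proof. intros H0 He. exact (esup_upper_bound S x 0 He H0). Qed.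

Lemma esup_empty (S : ER -> Prop) : (forall e, ~ S e) -> esup S = Fin 0.
Proof.
  intros H. unfold esup.
  destruct (excluded_middle_informative (S PInf)) as [h|h]; [exfalso; apply (H _ h)|].
  destruct (excluded_middle_informative
       ((exists r, S (Fin r)) /\ bound (fun r => S (Fin r)))) as [[[r h'] _]|h'];
    [exfalso; apply (H _ h')|].
  destruct (excluded_middle_informative (exists r, S (Fin r))) as [[r h'']|];
    [exfalso; apply (H _ h'')|reflexivity].
Qed.

Lemma er_add_PInf_r a : er_add a PInf = PInf.
Proof. destruct a; reflexivity. Qed.

Lemma einf_finite (S : ER -> Prop) lb :
  (exists r, S (Fin r)) -> (forall r, S (Fin r) -> lb <= r) ->
  exists m, einf S = Fin m /\ lb <= m /\ (forall r, S (Fin r) -> m <= r) /\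
    (forall rho, m < rho -> exists r, S (Fin r) /\ r < rho).
Proof.
  intros [r0 H0] Hlb. unfold einf.
  destruct (excluded_middle_informative (exists r, S (Fin r))) as [_|h];
    [|exfalso; apply h; exists r0; exact H0].
  set (T := fun r => S (Fin (- r))).
  assert (HT : exists m, is_lub T m).
  { assert (Hb : bound T). { exists (- lb). intros x Hx. apply Hlb in Hx. lra. }
    assert (Hn : exists x, T x). { exists (- r0). unfold T. rewrite Ropp_involutive. exact H0. }
    destruct (completeness _ Hb Hn) as [m Hm]; exists m; exact Hm. }
  pose proof (epsilon_spec (inhabits 0) _ HT) as Hm.
  set (m := epsilon (inhabits 0) (fun m => is_lub T m)) in *.
  exists (- m). split; [reflexivity|]. destruct Hm as [Hu Hl].
  split; [|split].
  - assert (m <= - lb). { apply Hl. intros x Hx. apply Hlb in Hx. lra. } lra.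
  - intros r Hr. assert (- r <= m). { apply Hu. unfold T. rewrite Ropp_involutive. exact Hr. } lra.
  - intros rho Hrho. apply NNPP. intro Hno.
    assert (m <= - rho). { apply Hl. intros x Hx. unfold T in Hx.
      destruct (Rle_dec x (- rho)) as [?|Hc]; [assumption|].
      exfalso; apply Hno. exists (- x). split; [exact Hx| lra]. }
    lra.
Qed.

Lemma einfR_finite (S : R -> Prop) lb :
  (exists r, S r) -> (forall r, S r -> lb <= r) ->
  exists m, einfR S = Fin m /\ lb <= m /\ (forall r, S r -> m <= r) /\
    (forall rho, m < rho -> exists r, S r /\ r < rho).
Proof.
  intros [r0 H0] Hlb. unfold einfR.
  destruct (einf_finite (fun e => exists r, S r /\ e = Fin r) lb) as [m [E [A [B C]]]].
  - exists r0, r0; auto.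
  - intros r [r' [Hr' Heq]]. injection Heq as ->. auto.
  - exists m; split; [exact E|split; [exact A|split]].
    + intros r Hr. apply B. exists r; auto.
    + intros rho Hrho. destruct (C rho Hrho) as [r [[r' [Hr' Heq]] Hlt]].
      injection Heq as ->. exists r'; auto.
Qed.

Lemma rpow_ge0 x a : 0 <= rpow x a.
Proof. unfold rpow; destruct (Rlt_dec 0 x); [left; apply exp_pos|lra]. Qed.

Lemma rpow_gt0 x a : 0 < x -> 0 < rpow x a.
Proof. intro; unfold rpow; destruct (Rlt_dec 0 x); [apply exp_pos|lra]. Qed.

Lemma rpow_pos x a : 0 < x -> rpow x a = Rpower x a.
Proof. intro; unfold rpow; destruct (Rlt_dec 0 x); [reflexivity|lra]. Qed.

Lemma rpow_nonpos x a : x <= 0 -> rpow x a = 0.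
Proof. intro; unfold rpow; destruct (Rlt_dec 0 x); [lra|reflexivity]. Qed.

Lemma rpow_le x y a : 0 <= a -> 0 <= x <= y -> rpow x a <= rpow y a.
Proof.
  intros Ha [Hx Hxy]. destruct (Req_dec x 0) as [->|Hx0].
  - rewrite rpow_nonpos by lra. apply rpow_ge0.
  - rewrite !rpow_pos by lra. apply Rle_Rpower_l; lra.
Qed.

Lemma rpow_mul x y a : 0 <= x -> 0 <= y -> rpow (x * y) a = rpow x a * rpow y a.
Proof.
  intros Hx Hy. destruct (Req_dec x 0) as [->|Hx0].
  { rewrite Rmult_0_l, (rpow_nonpos 0 a) by lra. ring. }
  destruct (Req_dec y 0) as [->|Hy0].
  { rewrite Rmult_0_r, (rpow_nonpos 0 a) by lra. ring. }
  rewrite !rpow_pos by (try apply Rmult_lt_0_compat; lra).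
  rewrite Rpower_mult_distr; lra.
Qed.

Lemma rpow_rpow x a b : 0 <= x -> rpow (rpow x a) b = rpow x (a * b).
Proof.
  intros Hx. destruct (Req_dec x 0) as [->|Hx0].
  { rewrite (rpow_nonpos 0 a) by lra. rewrite (rpow_nonpos 0 b) by lra.
      symmetry; apply rpow_nonpos; lra. }
  rewrite (rpow_pos x a) by lra. rewrite rpow_pos by (apply exp_pos).
  rewrite rpow_pos by lra. apply Rpower_mult.
Qed.

Lemma rpow_1 x : 0 <= x -> rpow x 1 = x.
Proof.
  intros Hx. destruct (Req_dec x 0) as [->|Hx0]. { apply rpow_nonpos; lra. }
  rewrite rpow_pos by lra. apply Rpower_1; lra.
Qed.

Lemma rpow_rpow_inv x a : 0 <= x -> a <> 0 -> rpow (rpow x a) (/ a) = x.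
Proof. intros. rewrite rpow_rpow by lra. rewrite Rinv_r by lra. apply rpow_1; lra. Qed.

Lemma rpow_inv_rpow x a : 0 <= x -> a <> 0 -> rpow (rpow x (/ a)) a = x.
Proof. intros. rewrite rpow_rpow by lra. rewrite Rinv_l by lra. apply rpow_1; lra. Qed.

Lemma rpow_pow_nat x n : 0 < x -> rpow x (INR n) = x ^ n.
Proof. intros. rewrite rpow_pos by lra. apply Rpower_pow; lra. Qed.

Lemma rpow_Rinv x a : 0 < x -> rpow (/ x) a = / rpow x a.
Proof.
  intros Hx. rewrite !rpow_pos by (try apply Rinv_0_lt_compat; lra).
  unfold Rpower. rewrite ln_Rinv by lra. rewrite <- exp_Ropp. f_equal. ring.
Qed.

Lemma rpow2_ge2 p : 1 <= p -> 2 <= rpow 2 p.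
Proof.
  intros. rewrite rpow_pos by lra. rewrite <- (Rpower_1 2) at 1 by lra.
  apply Rle_Rpower; lra.
Qed.

Lemma rpow_le_exponent x a b : 1 <= x -> a <= b -> rpow x a <= rpow x b.
Proof. intros. rewrite !rpow_pos by lra. apply Rle_Rpower; lra. Qed.

Lemma rpow_sum_le u w a : 0 <= a -> 0 <= u -> 0 <= w ->
  rpow (u + w) a <= rpow 2 a * (rpow u a + rpow w a).
Proof.
  intros Ha Hu Hw.
  assert (H : rpow (u + w) a <= rpow 2 a * rpow (Rmax u w) a).
  { rewrite <- rpow_mul by (try apply Rmax_Rle; lra).
    apply rpow_le; [lra|]. split; [lra|].
    pose proof (Rmax_l u w); pose proof (Rmax_r u w). lra. }
  eapply Rle_trans; [exact H|]. apply Rmult_le_compat_l; [apply rpow_ge0|].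
  unfold Rmax; destruct (Rle_dec u w); pose proof (rpow_ge0 u a); pose proof (rpow_ge0 w a); lra.
Qed.

Lemma PI_gt3 : 3 < PI.
Proof. pose proof PI2_3_2. lra. Qed.

Lemma abs_sin_le_pos w : 0 <= w -> Rabs (sin w) <= w.
Proof.
  intros Hw. destruct (Req_dec w 0) as [->|Hw0]. { rewrite sin_0, Rabs_R0; lra. }
  pose proof (sin_lt_x w ltac:(lra)). pose proof (SIN_bound w). pose proof PI_gt3.
  destruct (Rle_dec w 1).
  - assert (0 <= sin w) by (apply sin_ge_0; lra). rewrite Rabs_right; lra.
  - unfold Rabs; destruct (Rcase_abs (sin w)); lra.
Qed.

Lemma abs_sin_le z : Rabs (sin z) <= Rabs z.
Proof.
  destruct (Rle_dec 0 z).
  - rewrite (Rabs_right z) by lra. apply abs_sin_le_pos; lra.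
  - pose proof (abs_sin_le_pos (-z) ltac:(lra)). rewrite sin_neg, Rabs_Ropp in H.
    rewrite (Rabs_left z) by lra. lra.
Qed.

Lemma sin_lipschitz x y : Rabs (sin x - sin y) <= Rabs (x - y).
Proof.
  rewrite form4. rewrite !Rabs_mult. rewrite (Rabs_right 2) by lra.
  pose proof (abs_sin_le ((x - y) / 2)). pose proof (COS_bound ((x + y) / 2)).
  assert (Rabs (cos ((x + y) / 2)) <= 1) by (apply Rabs_le; lra).
  assert (Rabs ((x - y) / 2) = Rabs (x - y) / 2).
  { unfold Rdiv. rewrite Rabs_mult, (Rabs_right (/ 2)) by lra. reflexivity. }
  pose proof (Rabs_pos (sin ((x - y) / 2))). pose proof (Rabs_pos (cos ((x + y) / 2))).
  nra.
Qed.

Lemma floor_nat x : 0 <= x -> exists n : nat, INR n <= x < INR n + 1.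
Proof.
  intros Hx. destruct (archimed x) as [H1 H2].
  set (z := (up x - 1)%Z).
  assert (Hz : (0 <= z)%Z).
  { unfold z. assert (0 < IZR (up x)) by lra. apply lt_IZR in H. lia. }
  exists (Z.to_nat z). rewrite INR_IZR_INZ, Z2Nat.id by exact Hz.
  unfold z. rewrite minus_IZR. lra.
Qed.

Lemma INR_pow2 n : INR (2 ^ n) = 2 ^ n.
Proof. rewrite pow_INR. simpl. replace (1 + 1) with 2 by ring. reflexivity. Qed.

Lemma pow2_ge4 L : (2 <= L)%nat -> (4 <= 2 ^ L)%nat.
Proof. intros HL. replace 4%nat with (2 ^ 2)%nat by reflexivity. apply Nat.pow_le_mono_r; lia. Qed.

Lemma pow2_pred k : (1 <= k)%nat -> 2 ^ k = 2 * 2 ^ (k - 1).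
Proof. intros. destruct k; [lia|]. simpl. replace (k - 0)%nat with k by lia. reflexivity. Qed.

Lemma powerRZ2_neg_nat k : powerRZ 2 (- Z.of_nat k) = / 2 ^ k.
Proof. rewrite powerRZ_neg', <- pow_powerRZ. reflexivity. Qed.

Lemma sumR_of_infinite_sum f l : infinite_sum f l -> sumR f = l.
Proof.
  intros H. unfold sumR. apply (uniqueness_sum f).
  - apply (epsilon_spec (inhabits 0) (fun l => infinite_sum f l)). exists l; exact H.
  - exact H.
Qed.

Lemma sum_f_R0_ge_term f i n : (forall k, 0 <= f k) -> (i <= n)%nat -> f i <= sum_f_R0 f n.
Proof.
  intros Hf Hin. induction n.
  - replace i with 0%nat by lia. simpl; lra.
  - destruct (Nat.eq_dec i (S n)) as [->|Hne].
    + simpl. pose proof (cond_pos_sum f n Hf). lra.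
    + simpl. pose proof (Hf (S n)). assert (f i <= sum_f_R0 f n) by (apply IHn; lia). lra.
Qed.

Lemma series_term_le f l i : (forall k, 0 <= f k) -> infinite_sum f l -> f i <= l.
Proof.
  intros Hf Hl. eapply Rle_trans; [apply (sum_f_R0_ge_term f i i Hf); lia|].
  apply sum_incr; assumption.
Qed.

Lemma nonneg_series_bounded f M : (forall i, 0 <= f i) -> (forall n, sum_f_R0 f n <= M) ->
  exists l, infinite_sum f l /\ l <= M /\ 0 <= l.
Proof.
  intros Hf HM.
  assert (Hg : Un_growing (sum_f_R0 f)).
  { intro n. simpl. pose proof (Hf (S n)). lra. }
  assert (Hu : has_ub (sum_f_R0 f)).
  { exists M. intros x [n ->]. apply HM. }
  destruct (growing_cv _ Hg Hu) as [l Hl].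
  exists l. split; [exact Hl|split].
  - apply Rle_cv_lim with (Un := sum_f_R0 f) (Vn := fun _ => M); auto.
    intros e He; exists 0%nat; intros; unfold Rdist, R_dist; rewrite Rminus_diag, Rabs_R0; lra.
  - eapply Rle_trans; [apply (cond_pos_sum f 0 Hf)|]. apply sum_incr; assumption.
Qed.

Lemma infinite_sum_single f j : (forall n, n <> j -> f n = 0) -> infinite_sum f (f j).
Proof.
  intros Hf eps Heps. exists j. intros n Hn.
  assert (sum_f_R0 f n = f j).
  { induction n.
    - replace j with 0%nat by lia. reflexivity.
    - destruct (Nat.eq_dec j (S n)) as [->|Hne].
      + simpl. rewrite sum_eq_R0; [ring|]. intros k Hk. apply Hf. lia.
      + simpl. rewrite IHn by lia. rewrite (Hf (S n)) by lia. ring. }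
  rewrite H. unfold Rdist, R_dist. rewrite Rminus_diag, Rabs_R0; lra.
Qed.

Definition lp_term (p : R) (x : seqR) : nat -> R := fun i => rpow (Rabs (x i)) p.

Definition lp_sum (p : R) (x : seqR) : R := sumR (lp_term p x).

Lemma lp_term_ge0 p x i : 0 <= lp_term p x i.
Proof. apply rpow_ge0. Qed.

Lemma in_lp_of_bounded_partial p x M : (forall n, sum_f_R0 (lp_term p x) n <= M) ->
  in_lp p x /\ lp_sum p x <= M /\ 0 <= lp_sum p x.
Proof.
  intros H.
  destruct (nonneg_series_bounded (lp_term p x) M (lp_term_ge0 p x) H) as [l [Hl [HM H0]]].
  unfold lp_sum. rewrite (sumR_of_infinite_sum _ _ Hl). split; [exists l; exact Hl|auto].
Qed.

Lemma in_lp_infinite_sum p x : in_lp p x -> infinite_sum (lp_term p x) (lp_sum p x).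
Proof.
  intros [l Hl]. change (infinite_sum (lp_term p x) l) in Hl.
  unfold lp_sum. rewrite (sumR_of_infinite_sum _ _ Hl). exact Hl.
Qed.

Lemma lp_sum_partial p x n : in_lp p x -> sum_f_R0 (lp_term p x) n <= lp_sum p x.
Proof. intros H. apply sum_incr; [apply in_lp_infinite_sum; auto|apply lp_term_ge0]. Qed.

Lemma lp_sum_ge0 p x : in_lp p x -> 0 <= lp_sum p x.
Proof. intros H. eapply Rle_trans;
  [apply (cond_pos_sum _ 0 (lp_term_ge0 p x))|apply lp_sum_partial; auto]. Qed.

Lemma lp_term_le_sum p x i : in_lp p x -> lp_term p x i <= lp_sum p x.
Proof. intros H. apply series_term_le; [apply lp_term_ge0|apply in_lp_infinite_sum; auto]. Qed.

Lemma lpnorm_ge0 p x : 0 <= lpnorm p x.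
Proof. apply rpow_ge0. Qed.

Lemma lpnorm_le_of_sum p x B : 0 < p -> in_lp p x -> 0 <= B ->
  lp_sum p x <= rpow B p -> lpnorm p x <= B.
Proof.
  intros Hp Hx HB H. unfold lpnorm. fold (lp_term p x). fold (lp_sum p x).
  rewrite <- (rpow_rpow_inv B p) by lra.
  apply rpow_le; [left; apply Rinv_0_lt_compat; lra|]. split; [apply lp_sum_ge0; auto|auto].
Qed.

Lemma lp_sum_le_of_lpnorm p x B : 0 < p -> in_lp p x -> lpnorm p x <= B -> lp_sum p x <= rpow B p.
Proof.
  intros Hp Hx H. unfold lpnorm in H. fold (lp_term p x) in H. fold (lp_sum p x) in H.
  rewrite <- (rpow_inv_rpow (lp_sum p x) p) by (first [apply lp_sum_ge0; auto | lra]).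
  apply rpow_le; [lra|]. split; [apply rpow_ge0|auto].
Qed.

Lemma coord_le_lpnorm p x i : 0 < p -> in_lp p x -> Rabs (x i) <= lpnorm p x.
Proof.
  intros Hp Hx. unfold lpnorm. fold (lp_term p x). fold (lp_sum p x).
  rewrite <- (rpow_rpow_inv (Rabs (x i)) p) by (try apply Rabs_pos; lra).
  apply rpow_le; [left; apply Rinv_0_lt_compat; lra|]. split; [apply rpow_ge0|].
  apply (lp_term_le_sum p x i Hx).
Qed.

Lemma sum_f_R0_scale_add f g c n :
  sum_f_R0 (fun i => c * (f i + g i)) n = c * (sum_f_R0 f n + sum_f_R0 g n).
Proof. induction n; simpl; [ring|rewrite IHn; ring]. Qed.

Lemma in_lp_dominated p x y (z : seqR) : 0 <= p -> in_lp p x -> in_lp p y ->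
  (forall i, Rabs (z i) <= Rabs (x i) + Rabs (y i)) ->
  in_lp p z /\ lp_sum p z <= rpow 2 p * (lp_sum p x + lp_sum p y).
Proof.
  intros Hp Hx Hy Hz.
  destruct (in_lp_of_bounded_partial p z (rpow 2 p * (lp_sum p x + lp_sum p y))) as [A [B _]];
    [|auto].
  intros n. eapply Rle_trans.
  - apply (sum_Rle _ (fun i => rpow 2 p * (lp_term p x i + lp_term p y i))). intros i _.
    unfold lp_term. eapply Rle_trans; [|apply rpow_sum_le; try apply Rabs_pos; lra].
    apply rpow_le; [lra|split; [apply Rabs_pos|apply Hz]].
  - rewrite sum_f_R0_scale_add. apply Rmult_le_compat_l; [apply rpow_ge0|].
    pose proof (lp_sum_partial p x n Hx); pose proof (lp_sum_partial p y n Hy); lra.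
Qed.

Lemma in_lp_sub p x y : 0 <= p -> in_lp p x -> in_lp p y ->
  in_lp p (vsub x y) /\ lp_sum p (vsub x y) <= rpow 2 p * (lp_sum p x + lp_sum p y).
Proof.
  intros. apply in_lp_dominated; auto. intros i. unfold vsub. unfold Rminus.
  eapply Rle_trans; [apply Rabs_triang|]. rewrite Rabs_Ropp; lra.
Qed.

Lemma in_lp_add p x y : 0 <= p -> in_lp p x -> in_lp p y -> in_lp p (vadd x y).
Proof. intros. apply (in_lp_dominated p x y); auto. intros i. apply Rabs_triang. Qed.

Lemma in_lp_scale p t x : 0 <= p -> in_lp p x -> in_lp p (vscale t x).
Proof.
  intros Hp Hx.
  assert (E : forall n,
    sum_f_R0 (lp_term p (vscale t x)) n = rpow (Rabs t) p * sum_f_R0 (lp_term p x) n).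
  { intro n. induction n; simpl; [|rewrite IHn]; unfold lp_term, vscale;
      rewrite Rabs_mult, rpow_mul by apply Rabs_pos; ring. }
  apply (in_lp_of_bounded_partial p (vscale t x) (rpow (Rabs t) p * lp_sum p x)).
  intros n. rewrite E. apply Rmult_le_compat_l; [apply rpow_ge0|apply lp_sum_partial; auto].
Qed.

Lemma lp_sum_zero p x : 0 < p -> (forall i, x i = 0) -> in_lp p x /\ lp_sum p x = 0.
Proof.
  intros Hp H. destruct (in_lp_of_bounded_partial p x 0) as [A [B C]].
  - intros n. rewrite sum_eq_R0; [lra|]. intros k _. unfold lp_term. rewrite H, Rabs_R0.
    apply rpow_nonpos; lra.
  - split; auto; lra.
Qed.

Lemma lpnorm_zero p x : 0 < p -> (forall i, x i = 0) -> lpnorm p x = 0.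
Proof.
  intros Hp H. destruct (lp_sum_zero p x Hp H) as [_ E]. unfold lpnorm. fold (lp_term p x).
    fold (lp_sum p x).
  rewrite E. apply rpow_nonpos; lra.
Qed.

Lemma lpnorm_single_coord p x j : 0 < p -> (forall i, i <> j -> x i = 0) ->
  in_lp p x /\ lpnorm p x = Rabs (x j).
Proof.
  intros Hp H. assert (Hs : infinite_sum (lp_term p x) (lp_term p x j)).
  { apply infinite_sum_single. intros n Hn. unfold lp_term. rewrite H, Rabs_R0 by auto.
      apply rpow_nonpos; lra. }
  split; [exists (lp_term p x j); exact Hs|]. unfold lpnorm. fold (lp_term p x).
    rewrite (sumR_of_infinite_sum _ _ Hs).
  unfold lp_term. apply rpow_rpow_inv; [apply Rabs_pos|lra].
Qed.

Lemma ldist_ge0 p x y : 0 <= ldist p x y.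
Proof. apply lpnorm_ge0. Qed.

Lemma coord_le_ldist p x y i : 0 < p -> in_lp p x -> in_lp p y -> Rabs (x i - y i) <= ldist p x y.
Proof.
  intros Hp Hx Hy. unfold ldist. apply (coord_le_lpnorm p (vsub x y) i Hp).
    apply in_lp_sub; auto; lra.
Qed.

Lemma ldist_self p x : 0 < p -> ldist p x x = 0.
Proof. intros. apply lpnorm_zero; auto. intros i; unfold vsub; ring. Qed.

Lemma lp_sum_quasi_triangle p x y z : 0 < p -> in_lp p x -> in_lp p y -> in_lp p z ->
  lp_sum p (vsub x z) <= rpow 2 p * (lp_sum p (vsub x y) + lp_sum p (vsub z y)).
Proof.
  intros Hp Hx Hy Hz.
  destruct (in_lp_sub p x y) as [H1 _]; try lra; auto.
  destruct (in_lp_sub p z y) as [H2 _]; try lra; auto.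
  destruct (in_lp_dominated p (vsub x y) (vsub z y) (vsub x z)) as [_ H]; auto; try lra.
  intros i. unfold vsub. replace (x i - z i) with ((x i - y i) - (z i - y i)) by ring.
  unfold Rminus at 1. eapply Rle_trans; [apply Rabs_triang|]. rewrite Rabs_Ropp. lra.
Qed.

Lemma ldist_le_of_sum p x y B : 0 < p -> in_lp p x -> in_lp p y -> 0 <= B ->
  lp_sum p (vsub x y) <= rpow B p -> ldist p x y <= B.
Proof. intros. apply lpnorm_le_of_sum; auto. apply in_lp_sub; auto; lra. Qed.

Lemma lp_sum_le_of_ldist p x y B : 0 < p -> in_lp p x -> in_lp p y ->
  ldist p x y <= B -> lp_sum p (vsub x y) <= rpow B p.
Proof. intros. apply lp_sum_le_of_lpnorm; auto. apply in_lp_sub; auto; lra. Qed.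

(* Minkowski's inequality is avoided: the quasi-triangle inequality, with constant
   2^(1+1/p) <= 4, is enough for every estimate below. *)
Lemma ldist_le_4 p x y z R : 1 <= p -> in_lp p x -> in_lp p y -> in_lp p z ->
  ldist p x y <= R -> ldist p z y <= R -> ldist p x z <= 4 * R.
Proof.
  intros Hp Hx Hy Hz H1 H2.
  assert (HR : 0 <= R) by (pose proof (ldist_ge0 p x y); lra).
  apply ldist_le_of_sum; auto; try lra.
  eapply Rle_trans; [apply (lp_sum_quasi_triangle p x y z); auto; lra|].
  pose proof (lp_sum_le_of_ldist p x y R ltac:(lra) Hx Hy H1).
  pose proof (lp_sum_le_of_ldist p z y R ltac:(lra) Hz Hy H2).
  rewrite rpow_mul by lra.
  assert (E : 4 = 2 * 2) by ring. rewrite E, rpow_mul by lra.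
  pose proof (rpow2_ge2 p Hp). pose proof (rpow_ge0 R p). pose proof (rpow_ge0 2 p).
  assert (rpow 2 p * (lp_sum p (vsub x y) + lp_sum p (vsub z y)) <= rpow 2 p * (2 * rpow R p)).
  { apply Rmult_le_compat_l; lra. }
  assert (rpow 2 p * (2 * rpow R p) <= rpow 2 p * (rpow 2 p * rpow R p)).
  { apply Rmult_le_compat_l; [lra|]. apply Rmult_le_compat_r; lra. }
  lra.
Qed.

Definition unit0 : seqR := fun i => if (i =? 0)%nat then 1 else 0.

Lemma unit0_in_lp p : 0 < p -> in_lp p unit0.
Proof.
  intros Hp. apply (lpnorm_single_coord p unit0 0%nat Hp). intros i Hi. unfold unit0.
  destruct (Nat.eqb_spec i 0); [contradiction|reflexivity].
Qed.

Lemma vzero_in_lp p : 0 < p -> in_lp p vzero.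
Proof. intros Hp. apply (lp_sum_zero p vzero Hp). intros; reflexivity. Qed.

Lemma diam_le_of_bounded p (U : seqR -> Prop) B : 0 < p -> 0 <= B ->
  (forall x y, U x -> U y -> ldist p x y <= B) ->
  exists d, diam p U = Fin d /\ 0 <= d <= B.
Proof.
  intros Hp HB H. unfold diam.
  destruct (classic (exists x, U x)) as [[x0 Hx0]|Hne].
  - destruct (esup_finite (fun e => exists x y, U x /\ U y /\ e = Fin (ldist p x y)))
      as [m [Em Hm]].
    + intros [x [y [_ [_ E]]]]. discriminate.
    + exists (ldist p x0 x0), x0, x0. auto.
    + exists B. intros r [x [y [Hx [Hy E]]]]. injection E as ->. apply H; auto.
    + exists m. split; [exact Em|]. destruct Hm as [Hu Hl]. split.
      * eapply Rle_trans; [apply (ldist_ge0 p x0 x0)|]. apply Hu. exists x0, x0; auto.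
      * apply Hl. intros r [x [y [Hx [Hy E]]]]. injection E as ->. apply H; auto.
  - exists 0. split; [|lra]. apply esup_empty. intros e [x [y [Hx _]]]. apply Hne; eauto.
Qed.

Lemma cball_diam_bounds p c R : 1 <= p -> 0 < R -> in_lp p c ->
  exists D, diam p (cball p c R) = Fin D /\ R <= D <= 4 * R.
Proof.
  intros Hp HR Hc.
  destruct (diam_le_of_bounded p (cball p c R) (4 * R)) as [D [ED HD]]; try lra.
  { intros x y [Hx Hxc] [Hy Hyc]. apply (ldist_le_4 p x c y R); auto. }
  exists D. split; [exact ED|split; [|lra]].
  set (z := vadd c (vscale R unit0)).
  assert (Hz : in_lp p z) by (apply in_lp_add; try lra; auto; apply in_lp_scale; try lra;
    apply unit0_in_lp; lra).
  assert (Ezc : vsub z c = vscale R unit0).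
  { apply functional_extensionality; intros i. unfold z, vsub, vadd, vscale. ring. }
  assert (Hd : ldist p z c = R).
  { unfold ldist. rewrite Ezc.
      destruct (lpnorm_single_coord p (vscale R unit0) 0%nat ltac:(lra)) as [_ E].
    - intros i Hi. unfold vscale, unit0. destruct (Nat.eqb_spec i 0); [contradiction|ring].
    - rewrite E. unfold vscale, unit0. simpl. rewrite Rmult_1_r. apply Rabs_right; lra. }
  unfold diam in ED. rewrite <- Hd. eapply esup_upper_bound; [exact ED|].
  exists z, c. split; [split; [exact Hz|lra]|split; [split; [exact Hc|]|reflexivity]].
  rewrite ldist_self; lra.
Qed.

Lemma dist_set_finite p x (L : seqR -> Prop) y0 lb :
  L y0 -> 0 <= lb -> (forall y, L y -> lb <= ldist p x y) ->
  exists m, dist_set p x L = Fin m /\ lb <= m /\ m <= ldist p x y0.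
Proof.
  intros Hy0 Hlb H. unfold dist_set.
  destruct (einfR_finite (fun r => exists y, L y /\ r = ldist p x y) lb) as [m [E [H1 [H2 _]]]].
  - exists (ldist p x y0), y0; auto.
  - intros r [y [Hy ->]]. auto.
  - exists m. split; [exact E|split; [exact H1|]]. apply H2. exists y0; auto.
Qed.

Lemma net_near p (E : seqR -> Prop) rho Xk y : is_net p E rho Xk -> E y ->
  exists x, Xk x /\ ldist p y x < rho.
Proof.
  intros [_ [_ H3]] Hy. specialize (H3 y Hy). unfold dist_set in H3.
  destruct (classic (exists r, exists x, Xk x /\ r = ldist p y x)) as [Hne|Hemp].
  - destruct (einfR_finite (fun r => exists x,
      Xk x /\ r = ldist p y x) 0 Hne) as [m [Em [_ [_ Hlt]]]].
    + intros r [x [_ ->]]. apply ldist_ge0.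
    + rewrite Em in H3. simpl in H3. destruct (Hlt rho H3) as [r [[x [Hx ->]] Hr]].
      exists x; auto.
  - exfalso. unfold einfR, einf in H3.
    destruct (excluded_middle_informative _) as [[r [r' [Hr' Er]]]|_].
    + apply Hemp. exists r'. exact Hr'.
    + exact H3.
Qed.

Definition lsum (l : list R) : R := fold_right Rplus 0 l.

Lemma fold_er_add_Fin {I : Type} (f : I -> R) (l : list I) :
  fold_right er_add (Fin 0) (map (fun n => Fin (f n)) l) = Fin (lsum (map f l)).
Proof. induction l; simpl; [reflexivity|rewrite IHl; reflexivity]. Qed.

Lemma lsum_app l1 l2 : lsum (l1 ++ l2) = lsum l1 + lsum l2.
Proof. induction l1; simpl; [ring|unfold lsum in *; simpl; rewrite IHl1; ring]. Qed.

Lemma lsum_split (d : nat -> R) N l : NoDup l ->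
  lsum (map d l) = lsum (map (fun n => if (n =? N)%nat then 0 else d n) l)
                   + (if in_dec Nat.eq_dec N l then d N else 0).
Proof.
  induction l as [|a l IH]; intros Hnd.
  - simpl. destruct (in_dec Nat.eq_dec N nil) as [[]|]. unfold lsum; simpl; ring.
  - inversion Hnd; subst. cbn [map]. unfold lsum in *; cbn [fold_right]. rewrite IH by auto.
    destruct (in_dec Nat.eq_dec N l) as [Hi|Hi];
    destruct (in_dec Nat.eq_dec N (a :: l)) as [Hi'|Hi'].
    + destruct (Nat.eqb_spec a N) as [->|Hne]; [contradiction|ring].
    + exfalso; apply Hi'; right; auto.
    + destruct Hi' as [->|Hi']; [|contradiction]. rewrite Nat.eqb_refl. ring.
    + destruct (Nat.eqb_spec a N) as [->|Hne]; [exfalso; apply Hi'; left; auto|ring].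
Qed.

Lemma lsum_nodup_le_prefix (N : nat) : forall (d : nat -> R) l, NoDup l -> (forall n, 0 <= d n) ->
  (forall n, (N <= n)%nat -> d n = 0) ->
  lsum (map d l) <= lsum (map d (seq 0 N)).
Proof.
  induction N; intros d l Hnd H0 HN.
  - simpl. assert (lsum (map d l) = 0).
    { clear Hnd. induction l; simpl; [reflexivity|]. unfold lsum in *; simpl.
        rewrite IHl, HN by lia. ring. }
    rewrite H. unfold lsum; simpl; lra.
  - rewrite (lsum_split d N l Hnd).
    set (d' := fun n => if (n =? N)%nat then 0 else d n).
    assert (IH : lsum (map d' l) <= lsum (map d' (seq 0 N))).
    { apply IHN; auto.
      - intros n; unfold d'; destruct (n =? N)%nat; [lra|apply H0].
      - intros n Hn; unfold d'. destruct (Nat.eqb_spec n N); [reflexivity|apply HN; lia]. }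
    assert (E : map d' (seq 0 N) = map d (seq 0 N)).
    { apply map_ext_in. intros a Ha. apply in_seq in Ha. unfold d'.
      destruct (Nat.eqb_spec a N); [lia|reflexivity]. }
    rewrite E in IH. rewrite seq_S, map_app, lsum_app.
    assert (E2 : lsum (map d (0 + N :: nil)%nat) = d N) by (unfold lsum; simpl; ring).
    rewrite E2.
    destruct (in_dec Nat.eq_dec N l); pose proof (H0 N); lra.
Qed.

Lemma lsum_const_le (d : nat -> R) N B : (forall n,
  d n <= B) -> lsum (map d (seq 0 N)) <= INR N * B.
Proof.
  intros H. induction N.
  - simpl. unfold lsum; simpl; lra.
  - rewrite seq_S, map_app, lsum_app, S_INR.
    assert (E2 : lsum (map d (0 + N :: nil)%nat) = d N) by (unfold lsum; simpl; ring).
    rewrite E2. pose proof (H N). lra.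
Qed.

Lemma lsum_lower_const {I : Type} (g : I -> R) l T : (forall x, In x l -> T <= g x) ->
  INR (length l) * T <= lsum (map g l).
Proof.
  induction l as [|a l IH]; intros H; [unfold lsum; simpl; lra|].
  unfold lsum in *; cbn [length map fold_right]. rewrite S_INR.
  assert (T <= g a) by (apply H; left; auto).
  assert (INR (length l) * T <= fold_right Rplus 0 (map g l))
    by (apply IH; intros; apply H; right; auto).
  lra.
Qed.

Lemma esum_Fin_unbounded {I : Type} (P : I -> Prop) (f : I -> R) :
  (forall M, exists l, NoDup l /\ Forall P l /\ M < lsum (map f l)) ->
  esum P (fun i => Fin (f i)) = PInf.
Proof.
  intros Hub. unfold esum. apply esup_unbounded.
  - exists 0, nil. split; [constructor|split; [constructor|reflexivity]].
  - intros [M HM]. destruct (Hub M) as [l [Hl [HP Hlt]]].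
    assert (lsum (map f l) <= M) by (apply HM; exists l; rewrite fold_er_add_Fin; auto).
    lra.
Qed.

Lemma esum_ge0 {I : Type} (P : I -> Prop) f r : esum P f = Fin r -> 0 <= r.
Proof.
  intros H. unfold esum in H. eapply esup_ge0; [|exact H].
  exists nil. simpl. split; [constructor|split; [constructor|reflexivity]].
Qed.

Lemma esum_nat_finite_support (f : nat -> ER) (d : nat -> R) N B :
  (forall n, f n = Fin (d n)) -> (forall n, 0 <= d n <= B) -> (forall n, (N <= n)%nat -> d n = 0) ->
  exists m, esum (fun _ => True) f = Fin m /\ m <= INR N * B.
Proof.
  intros Ef Hd HN.
  assert (Hfold : forall l, fold_right er_add (Fin 0) (map f l) = Fin (lsum (map d l))).
  { intros l. rewrite <- fold_er_add_Fin. f_equal. apply map_ext. exact Ef. }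
  assert (Hbound : forall l, NoDup l -> lsum (map d l) <= INR N * B).
  { intros l Hl. eapply Rle_trans; [apply (lsum_nodup_le_prefix N); auto; apply Hd|].
    apply lsum_const_le. apply Hd. }
  unfold esum.
  destruct (esup_finite (fun e => exists l : list nat, NoDup l /\ Forall (fun _ => True) l /\
       e = fold_right er_add (Fin 0) (map f l))) as [m [Em [_ Hlub]]].
  - intros [l [_ [_ E]]]. rewrite Hfold in E. discriminate.
  - exists 0, nil. split; [constructor|split; [constructor|reflexivity]].
  - exists (INR N * B). intros r [l [Hl [_ E]]]. rewrite Hfold in E. injection E as ->. auto.
  - exists m. split; [exact Em|]. apply Hlub.
    intros r [l [Hl [_ E]]]. rewrite Hfold in E. injection E as ->. auto.
Qed.

(** * Lipschitz curves have finite length *)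

Section LipschitzImage.

Variables (p Lip : R) (g : R -> seqR).
Hypothesis p_gt0 : 0 < p.
Hypothesis Lip_ge0 : 0 <= Lip.
Hypothesis g_in_lp : forall t, 0 <= t <= 1 -> in_lp p (g t).
Hypothesis g_lipschitz : forall s t, 0 <= s <= 1 -> 0 <= t <= 1 ->
  ldist p (g s) (g t) <= Lip * Rabs (s - t).

Definition arc_piece (N n : nat) : seqR -> Prop :=
  fun y => (n < N)%nat /\ exists t, INR n / INR N <= t <= INR (S n) / INR N /\ y = g t.

Lemma arc_piece_param_bounds N n t : (n < N)%nat ->
  INR n / INR N <= t <= INR (S n) / INR N -> 0 <= t <= 1.
Proof.
  intros Hn [H1 H2]. assert (INR (S n) <= INR N) by (apply le_INR; lia).
  assert (0 < INR N) by (apply lt_0_INR; lia). pose proof (pos_INR n). split.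
  - eapply Rle_trans; [|exact H1]. apply Rmult_le_pos; [lra|left; apply Rinv_0_lt_compat; lra].
  - eapply Rle_trans; [exact H2|]. apply Rmult_le_reg_r with (INR N); [lra|].
    unfold Rdiv. rewrite Rmult_assoc, Rinv_l by lra. lra.
Qed.

Lemma arc_piece_in_lp N n y : arc_piece N n y -> in_lp p y.
Proof. intros [Hn [t [Ht ->]]]. apply g_in_lp. eapply arc_piece_param_bounds; eauto. Qed.

Lemma arc_piece_diam N n : (0 < N)%nat ->
  exists d, diam p (arc_piece N n) = Fin d /\ 0 <= d <= Lip / INR N /\ ((N <= n)%nat -> d = 0).
Proof.
  intros HN. assert (HNr : 0 < INR N) by (apply lt_0_INR; lia).
  assert (0 <= Lip / INR N) by (apply Rmult_le_pos; [lra|left; apply Rinv_0_lt_compat; lra]).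
  destruct (lt_dec n N) as [Hn|Hn].
  - destruct (diam_le_of_bounded p (arc_piece N n) (Lip / INR N)) as [d [E Hd]]; auto.
    + intros x y [_ [t [Ht ->]]] [_ [s [Hs ->]]].
      pose proof (arc_piece_param_bounds N n t Hn Ht).
      pose proof (arc_piece_param_bounds N n s Hn Hs).
      eapply Rle_trans; [apply g_lipschitz; auto|].
      assert (INR (S n) / INR N - INR n / INR N = / INR N) by (rewrite S_INR; field; lra).
      assert (Rabs (t - s) <= / INR N) by (apply Rabs_le; lra).
      unfold Rdiv. apply Rmult_le_compat_l; lra.
    + exists d. split; [exact E|split; [exact Hd|intros; lia]].
  - destruct (diam_le_of_bounded p (arc_piece N n) 0) as [d [E Hd]]; try lra.
    + intros x y [Hx _]. lia.
    + exists d. repeat split; auto; lra.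
Qed.

Lemma arc_pieces_cover N x : (0 < N)%nat -> image01 g x -> exists n, arc_piece N n x.
Proof.
  intros HN [t [Ht ->]]. assert (HNr : 0 < INR N) by (apply lt_0_INR; lia).
  destruct (floor_nat (t * INR N)) as [n [Hn1 Hn2]]; [nra|].
  destruct (lt_dec n N) as [HnN|HnN].
  - exists n. split; [exact HnN|]. exists t. split; [|reflexivity].
    split; apply Rmult_le_reg_r with (INR N); try lra; unfold Rdiv;
      rewrite Rmult_assoc, Rinv_l by lra; rewrite ?S_INR; lra.
  - assert (INR N <= INR n) by (apply le_INR; lia).
    assert (t = 1) by nra. subst t.
    exists (N - 1)%nat. split; [lia|]. exists 1. split; [|reflexivity].
    replace (S (N - 1)) with N by lia. rewrite minus_INR by lia. simpl INR. split.
    + apply Rmult_le_reg_r with (INR N); [lra|].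
      unfold Rdiv. rewrite Rmult_assoc, Rinv_l by lra. lra.
    + right. field. lra.
Qed.

Lemma H1_delta_lipschitz_image delta : 0 < delta ->
  exists h, H1_delta p (image01 g) delta = Fin h /\ 0 <= h <= Lip.
Proof.
  intros Hd.
  destruct (archimed_cor1 (delta / (Lip + 1))) as [N [HN HN0]].
  { apply Rdiv_lt_0_compat; lra. }
  assert (HNr : 0 < INR N) by (apply lt_0_INR; lia).
  assert (Hsmall : Lip / INR N < delta).
  { apply Rle_lt_trans with ((Lip + 1) * / INR N).
    - apply Rmult_le_compat_r; [left; apply Rinv_0_lt_compat|]; lra.
    - apply Rmult_lt_reg_l with (/ (Lip + 1)); [apply Rinv_0_lt_compat; lra|].
      rewrite <- Rmult_assoc, Rinv_l, Rmult_1_l by lra. rewrite Rmult_comm. exact HN. }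
  set (d := fun n => er_real (diam p (arc_piece N n))).
  assert (Ed : forall n, diam p (arc_piece N n) = Fin (d n)).
  { intros n. unfold d. destruct (arc_piece_diam N n HN0) as [x [E _]]. rewrite E. reflexivity. }
  assert (Hdb : forall n, 0 <= d n <= Lip / INR N /\ ((N <= n)%nat -> d n = 0)).
  { intros n. unfold d. destruct (arc_piece_diam N n HN0) as [x [E H]]. rewrite E. exact H. }
  destruct (esum_nat_finite_support (fun n => diam p (arc_piece N n)) d N (Lip / INR N))
    as [m [Em Hm]]; try apply Hdb; [exact Ed|].
  assert (HmLip : m <= Lip) by (replace Lip with (INR N * (Lip / INR N)) by (field; lra); exact Hm).
  set (T := fun e => exists U : nat -> seqR -> Prop,
          (forall n y, U n y -> in_lp p y) /\
          (forall x, image01 g x -> exists n, U n x) /\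
          (forall n, er_le (diam p (U n)) (Fin delta)) /\
          e = esum (fun _ : nat => True) (fun n => diam p (U n))).
  assert (HT : T (Fin m)).
  { exists (arc_piece N). split; [|split; [|split]].
    - apply arc_piece_in_lp.
    - intros x Hx. apply arc_pieces_cover; auto.
    - intros n. rewrite Ed. simpl. destruct (Hdb n) as [[_ H] _]. lra.
    - symmetry; exact Em. }
  destruct (einf_finite T 0) as [h [Eh [H0 [Hle _]]]].
  - exists m; exact HT.
  - intros r [U' [_ [_ [_ E]]]]. symmetry in E. eapply esum_ge0; exact E.
  - exists h. split; [exact Eh|]. split; [exact H0|]. pose proof (Hle m HT). lra.
Qed.

Lemma H1_lipschitz_image_finite : er_lt (H1 p (image01 g)) PInf.
Proof.
  unfold H1.
  destruct (esup_finite (fun e => exists delta, 0 < delta /\ e = H1_delta p (image01 g) delta))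
    as [m [Em _]].
  - intros [d [Hd E]]. destruct (H1_delta_lipschitz_image d Hd) as [h [Eh _]].
    rewrite Eh in E. discriminate.
  - destruct (H1_delta_lipschitz_image 1 ltac:(lra)) as [h [Eh _]]. exists h, 1. split; [lra|auto].
  - exists Lip. intros r [d [Hd E]]. destruct (H1_delta_lipschitz_image d Hd) as [h [Eh Hh]].
    rewrite Eh in E. injection E as ->. lra.
  - rewrite Em. exact I.
Qed.

End LipschitzImage.

(** * Lower bounds for beta numbers *)

Definition S_term p (E : seqR -> Prop) A r (kx : Z * seqR) : R :=
  rpow (beta p E (cball p (snd kx) (A * powerRZ 2 (- fst kx)))) r *
  er_real (diam p (cball p (snd kx) (A * powerRZ 2 (- fst kx)))).

Lemma S_val_S_term p E r A X : S_val p E r A X =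
  er_add (diam p E)
    (esum (fun kx : Z * seqR => X (fst kx) (snd kx)) (fun kx => Fin (S_term p E A r kx))).
Proof. reflexivity. Qed.

Lemma is_line_axis p : 0 < p -> is_line p (fun y => exists t, y = vadd vzero (vscale t unit0)).
Proof.
  intros Hp. exists vzero, unit0.
  split; [apply vzero_in_lp; lra|split; [apply unit0_in_lp; lra|split; [|tauto]]].
  intros Heq. assert (unit0 0%nat = vzero 0%nat) by (rewrite Heq; reflexivity).
  unfold unit0, vzero in H. simpl in H. lra.
Qed.

Lemma dist_sup_in_ball_ge p (E : seqR -> Prop) c R L x0 s0 : 1 <= p -> in_lp p c ->
  (forall x, E x -> in_lp p x) -> is_line p L -> E x0 -> cball p c R x0 -> 0 <= s0 ->
  (forall y, L y -> s0 <= ldist p x0 y) ->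
  exists M, esup (fun e => exists x, E x /\ cball p c R x /\ e = Fin (er_real (dist_set p x L)))
            = Fin M /\ s0 <= M.
Proof.
  intros Hp Hc HE HL Hx0 Hx0Q Hs0 Hfar.
  destruct HL as [a [v [Ha [Hv [Hv0 HLeq]]]]].
  assert (Hy0 : L a).
  { apply HLeq. exists 0. apply functional_extensionality. intros i.
    unfold vadd, vscale. ring. }
  set (K := rpow 2 p * (rpow R p + lp_sum p (vsub a c))).
  assert (HK : 0 <= K).
  { apply Rmult_le_pos; [apply rpow_ge0|]. pose proof (rpow_ge0 R p).
    pose proof (lp_sum_ge0 p (vsub a c) ltac:(apply in_lp_sub; auto; lra)). lra. }
  assert (HB : forall x, E x -> cball p c R x -> ldist p x a <= rpow K (/ p)).
  { intros x Hx [Hxl Hxc]. apply ldist_le_of_sum; auto; try lra; [apply rpow_ge0|].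
    rewrite rpow_inv_rpow by lra.
    eapply Rle_trans; [apply (lp_sum_quasi_triangle p x c a); auto; lra|].
    apply Rmult_le_compat_l; [apply rpow_ge0|].
    pose proof (lp_sum_le_of_ldist p x c R ltac:(lra) Hxl Hc Hxc). lra. }
  destruct (esup_finite (fun e => exists x, E x /\ cball p c R x /\
                                   e = Fin (er_real (dist_set p x L)))) as [M [EM [HMu _]]].
  - intros [x [_ [_ Hx]]]. discriminate.
  - exists (er_real (dist_set p x0 L)), x0. auto.
  - exists (rpow K (/ p)). intros r [x [Hx [HxQ Er]]]. injection Er as ->.
    destruct (dist_set_finite p x L a 0 Hy0 ltac:(lra)) as [m [Em [_ Hm]]].
    { intros y _. apply ldist_ge0. }
    rewrite Em. simpl. specialize (HB x Hx HxQ). lra.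
  - exists M. split; [exact EM|].
    destruct (dist_set_finite p x0 L a s0 Hy0 Hs0 Hfar) as [m [Em [Hm _]]].
    eapply Rle_trans; [exact Hm|]. apply HMu.
    exists x0. split; [auto|split; [auto|]]. rewrite Em. reflexivity.
Qed.

Lemma beta_lower p (E : seqR -> Prop) c R s0 : 1 <= p -> 0 < R -> 0 <= s0 -> in_lp p c -> E c ->
  (forall x, E x -> in_lp p x) ->
  (forall a v, in_lp p a -> in_lp p v -> exists x, E x /\ cball p c R x /\
      forall s, s0 <= ldist p x (vadd a (vscale s v))) ->
  s0 / (4 * R) <= beta p E (cball p c R).
Proof.
  intros Hp HR Hs0 Hc HEc HE Hkey.
  destruct (cball_diam_bounds p c R Hp HR Hc) as [D [ED HD]].
  unfold beta.
  destruct (excluded_middle_informative (exists x, E x /\ cball p c R x)) as [_|Hn].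
  2:{ exfalso; apply Hn. exists c. split; [exact HEc|split; [exact Hc|rewrite ldist_self; lra]]. }
  rewrite ED. simpl er_real.
  destruct (einfR_finite (fun b => exists L, is_line p L /\
      b = er_real (esup (fun e => exists x, E x /\ cball p c R x /\
                                   e = Fin (er_real (dist_set p x L)))) / D) (s0 / (4 * R)))
    as [bt [Eb [Hb _]]].
  - eexists. exists (fun y => exists t, y = vadd vzero (vscale t unit0)).
    split; [apply is_line_axis; lra|reflexivity].
  - intros b [L [HL ->]].
    pose proof HL as [a [v [Ha [Hv [_ HLeq]]]]].
    destruct (Hkey a v Ha Hv) as [x0 [Hx0E [Hx0Q Hx0d]]].
    destruct (dist_sup_in_ball_ge p E c R L x0 s0) as [M [EM HM]]; auto.
    { intros y Hy. apply HLeq in Hy. destruct Hy as [t ->]. apply Hx0d. }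
    rewrite EM. simpl er_real. unfold Rdiv.
    apply Rle_trans with (s0 * / D).
    + apply Rmult_le_compat_l; [lra|]. apply Rinv_le_contravar; lra.
    + apply Rmult_le_compat_r; [left; apply Rinv_0_lt_compat|]; lra.
  - rewrite Eb. simpl. exact Hb.
Qed.

Lemma beta_term_lower p (E : seqR -> Prop) c R s0 r :
  1 <= p -> 0 < R -> 0 <= s0 -> 0 < r -> in_lp p c -> E c ->
  (forall x, E x -> in_lp p x) ->
  (forall a v, in_lp p a -> in_lp p v -> exists x, E x /\ cball p c R x /\
      forall s, s0 <= ldist p x (vadd a (vscale s v))) ->
  rpow (s0 / (4 * R)) r * R <= rpow (beta p E (cball p c R)) r * er_real (diam p (cball p c R)).
Proof.
  intros Hp HR Hs0 Hr Hc HEc HE Hkey.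
  pose proof (beta_lower p E c R s0 Hp HR Hs0 Hc HEc HE Hkey) as Hb.
  destruct (cball_diam_bounds p c R Hp HR Hc) as [D [ED HD]]. rewrite ED. simpl.
  apply Rmult_le_compat; [apply rpow_ge0|lra| |lra].
  apply rpow_le; [lra|]. split; [|exact Hb].
  apply Rmult_le_pos; [lra|left; apply Rinv_0_lt_compat; lra].
Qed.

(** * The coefficients *)

(* On the dyadic block 2^L <= i < 2^(L+1) the weight is 1/(2^L (L+1)(L+2)), so the block
   contributes 1/(L+1) - 1/(L+2) to the sum of the weights: sum b_i = 1/2, whereas block
   sums of b_i^s with s < 1 grow geometrically.  [bcoef_tail i] is twice the tail sum of
   the b_j with j >= i. *)
Definition dyadic_weight (i : nat) : R :=
  / (2 ^ (Nat.log2 i) * (INR (Nat.log2 i) + 1) * (INR (Nat.log2 i) + 2)).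

Definition bcoef (i : nat) : R := if (i =? 0)%nat then 0 else dyadic_weight i / 2.

Definition bcoef_tail (i : nat) : R :=
  / (INR (Nat.log2 i) + 1) - (INR i - 2 ^ (Nat.log2 i)) * dyadic_weight i.

Lemma dyadic_weight_pos i : 0 < dyadic_weight i.
Proof.
  unfold dyadic_weight. apply Rinv_0_lt_compat. pose proof (pos_INR (Nat.log2 i)).
  apply Rmult_lt_0_compat; [apply Rmult_lt_0_compat; [apply pow_lt|]|]; lra.
Qed.

Lemma dyadic_weight_le1 i : dyadic_weight i <= 1.
Proof.
  unfold dyadic_weight. pose proof (pos_INR (Nat.log2 i)).
  assert (1 <= 2 ^ Nat.log2 i) by (apply pow_R1_Rle; lra).
  rewrite <- Rinv_1. apply Rinv_le_contravar; [lra|].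
  assert (1 * 1 <= 2 ^ Nat.log2 i * (INR (Nat.log2 i) + 1)) by (apply Rmult_le_compat; lra).
  assert (1 * 1 <= 2 ^ Nat.log2 i * (INR (Nat.log2 i) + 1) * (INR (Nat.log2 i) + 2))
    by (apply Rmult_le_compat; lra). lra.
Qed.

Lemma bcoef_bounds i : 0 <= bcoef i <= 1/2.
Proof.
  unfold bcoef. destruct (i =? 0)%nat; [lra|].
    pose proof (dyadic_weight_pos i); pose proof (dyadic_weight_le1 i); lra.
Qed.

Lemma bcoef_tail_step i : (0 < i)%nat -> bcoef_tail i - bcoef_tail (S i) = dyadic_weight i.
Proof.
  intros Hi. pose proof (Nat.log2_spec i Hi) as [H1 H2].
  set (L := Nat.log2 i) in *.
  pose proof (pos_INR L).
  assert (HL : 0 < 2 ^ L) by (apply pow_lt; lra).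
  destruct (Nat.log2_succ_or i) as [E|E].
  - assert (Ei : S i = (2 ^ S L)%nat).
    { pose proof (Nat.log2_spec (S i) ltac:(lia)) as [H3 H4]. rewrite E in H3. fold L in H3. lia. }
    unfold bcoef_tail, dyadic_weight. rewrite E. fold L. rewrite Ei, INR_pow2, S_INR.
    assert (INR i = 2 * 2 ^ L - 1).
    { assert (INR (S i) = INR (2 ^ S L)) by (rewrite Ei; reflexivity).
      rewrite S_INR, INR_pow2 in H0. simpl in H0. lra. }
    rewrite H0. simpl. field. lra.
  - unfold bcoef_tail. rewrite E. fold L. unfold dyadic_weight. rewrite E. fold L.
    rewrite S_INR. field.
    repeat split; lra.
Qed.

Lemma bcoef_tail_ge0 i : (0 < i)%nat -> 0 <= bcoef_tail i.
Proof.
  intros Hi. pose proof (Nat.log2_spec i Hi) as [H1 H2].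
  unfold bcoef_tail, dyadic_weight. set (L := Nat.log2 i) in *. pose proof (pos_INR L).
  assert (HL : 0 < 2 ^ L) by (apply pow_lt; lra).
  assert (INR i < 2 * 2 ^ L).
  { apply lt_INR in H2. rewrite INR_pow2 in H2. simpl in H2. lra. }
  assert (2 ^ L <= INR i) by (apply le_INR in H1; rewrite INR_pow2 in H1; exact H1).
  assert (0 <= (INR i - 2 ^ L) / (2 ^ L) <= 1).
  { split; [apply Rmult_le_pos; [lra| left; apply Rinv_0_lt_compat; lra]|].
      apply Rmult_le_reg_r with (2 ^ L); [lra|].
    field_simplify; lra. }
  replace ((INR i - 2 ^ L) * / (2 ^ L * (INR L + 1) * (INR L + 2)))
    with ((INR i - 2 ^ L) / 2 ^ L * / ((INR L + 1) * (INR L + 2))) by (field; lra).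
  assert (/ (INR L + 1) - / ((INR L + 1) * (INR L + 2)) >= 0).
  { replace (/ (INR L + 1) - / ((INR L + 1) * (INR L + 2)))
      with ((INR L + 1) / ((INR L + 1) * (INR L + 2))) by (field; lra).
    apply Rle_ge, Rmult_le_pos; [lra| left; apply Rinv_0_lt_compat; nra]. }
  assert (0 < / ((INR L + 1) * (INR L + 2))) by (apply Rinv_0_lt_compat; nra).
  nra.
Qed.

Lemma bcoef_partial_sum n : sum_f_R0 bcoef n = (1 - bcoef_tail (S n)) / 2.
Proof.
  induction n.
  - simpl. unfold bcoef, bcoef_tail, dyadic_weight. simpl. field.
  - simpl sum_f_R0. rewrite IHn.
    assert (E : bcoef (S n) = dyadic_weight (S n) / 2) by reflexivity. rewrite E.
    pose proof (bcoef_tail_step (S n) ltac:(lia)). lra.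
Qed.

Lemma bcoef_partial_sum_le n : sum_f_R0 bcoef n <= 1/2.
Proof. rewrite bcoef_partial_sum. pose proof (bcoef_tail_ge0 (S n) ltac:(lia)). lra. Qed.

Definition block_bcoef (L : nat) : R := / (2 * 2 ^ L * (INR L + 1) * (INR L + 2)).

Definition acoef (p : R) (i : nat) : R := rpow (bcoef i) (/ p).

Lemma acoef_pow p i : 0 < p -> rpow (acoef p i) p = bcoef i.
Proof. intros. unfold acoef. apply rpow_inv_rpow; [apply bcoef_bounds|lra]. Qed.

Lemma acoef_bounds p i : 1 <= p -> 0 <= acoef p i <= 1.
Proof.
  intros Hp. split; [apply rpow_ge0|]. unfold acoef.
  pose proof (bcoef_bounds i).
  apply Rle_trans with (rpow 1 (/ p)).
  - apply rpow_le; [left; apply Rinv_0_lt_compat; lra|lra].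
  - rewrite !rpow_pos by lra. unfold Rpower. rewrite ln_1, !Rmult_0_r, exp_0. lra.
Qed.

Lemma acoef_on_block p L k : (2 <= L)%nat -> (2 ^ L - 2 <= k)%nat -> (k < 2 ^ L - 2 + 2 ^ L)%nat ->
  acoef p (k + 2) = rpow (block_bcoef L) (/ p).
Proof.
  intros HL Hk1 Hk2. unfold acoef. f_equal.
  pose proof (pow2_ge4 L HL) as H4.
  assert (Hlog : Nat.log2 (k + 2) = L).
  { apply Nat.log2_unique; [lia|]. simpl. lia. }
  unfold bcoef. destruct (Nat.eqb_spec (k + 2) 0); [lia|].
  unfold dyadic_weight, block_bcoef. rewrite Hlog. pose proof (pos_INR L).
  assert (0 < 2 ^ L) by (apply pow_lt; lra). field. repeat split; lra.
Qed.

Lemma block_sum_ge_geometric s L : 0 < s < 1 -> (1 <= L)%nat ->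
  rpow 2 (1 - s) ^ L / (2 * (INR L + 2) ^ 2) <= 2 ^ L * rpow (block_bcoef L) s.
Proof.
  intros Hs HL. pose proof (pos_INR L).
  set (C := 2 * (INR L + 1) * (INR L + 2)).
  assert (HC : 1 <= C) by (unfold C; nra).
  assert (H2L : 0 < 2 ^ L) by (apply pow_lt; lra).
  assert (Eb : block_bcoef L = / 2 ^ L * / C) by (unfold block_bcoef, C; field; repeat split; lra).
  rewrite Eb, rpow_mul by (left; apply Rinv_0_lt_compat; lra).
  rewrite !rpow_Rinv by lra.
  assert (E1 : rpow (2 ^ L) s = rpow 2 (INR L * s)).
  { rewrite <- (rpow_pow_nat 2 L) by lra. apply rpow_rpow; lra. }
  assert (E2 : 2 ^ L = rpow 2 (INR L * (1 - s)) * rpow 2 (INR L * s)).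
  { rewrite !rpow_pos by lra. rewrite <- Rpower_plus.
    replace (INR L * (1 - s) + INR L * s) with (INR L) by ring.
    rewrite Rpower_pow; lra. }
  assert (E3 : rpow 2 (INR L * (1 - s)) = rpow 2 (1 - s) ^ L).
  { rewrite <- rpow_pow_nat by (apply rpow_gt0; lra). rewrite rpow_rpow by lra.
    f_equal; ring. }
  assert (HCs : rpow C s <= C).
  { rewrite <- (rpow_1 C) at 2 by lra. apply rpow_le_exponent; lra. }
  assert (HCs0 : 0 < rpow C s) by (apply rpow_gt0; lra).
  assert (HqL : 0 < rpow 2 (1 - s) ^ L) by (apply pow_lt, rpow_gt0; lra).
  assert (H2s : 0 < rpow 2 (INR L * s)) by (apply rpow_gt0; lra).
  rewrite E1, E2 at 1. rewrite E3.
  replace (rpow 2 (1 - s) ^ L * rpow 2 (INR L * s) * (/ rpow 2 (INR L * s) * / rpow C s))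
    with (rpow 2 (1 - s) ^ L / rpow C s) by (field; lra).
  unfold Rdiv. apply Rmult_le_compat_l; [lra|]. apply Rinv_le_contravar; [lra|].
  unfold C in *. nra.
Qed.

Lemma geometric_beats_quadratic q M : 1 < q ->
  exists L, (2 <= L)%nat /\ M <= q ^ L / (2 * (INR L + 2) ^ 2).
Proof.
  intros Hq. set (d := q - 1). assert (Hd : 0 < d) by (unfold d; lra).
  destruct (INR_archimed (d ^ 3 / 50) (Rmax M 1)) as [n Hn].
  { apply Rmult_lt_0_compat; [apply pow_lt; lra|lra]. }
  assert (Hn1 : (1 <= n)%nat).
  { destruct n; [simpl in Hn; pose proof (Rmax_r M 1); lra|lia]. }
  exists (3 * n)%nat. split; [lia|].
  assert (Hnr : 1 <= INR n) by (apply (le_INR 1); lia).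
  assert (Hqn : INR n * d <= q ^ n).
  { replace q with (1 + d) by (unfold d; ring). pose proof (poly n d Hd). lra. }
  assert (E3n : q ^ (3 * n) = (q ^ n) ^ 3) by (rewrite <- pow_mult; f_equal; lia).
  rewrite E3n, mult_INR. simpl INR.
  assert (Hnd : 0 <= INR n * d) by nra.
  assert ((INR n * d) ^ 3 <= (q ^ n) ^ 3) by (apply pow_incr; lra).
  assert (Hden : 2 * ((1 + 1 + 1) * INR n + 2) ^ 2 <= 50 * INR n ^ 2) by nra.
  assert (Hden0 : 0 < 2 * ((1 + 1 + 1) * INR n + 2) ^ 2) by nra.
  apply Rle_trans with ((INR n * d) ^ 3 / (50 * INR n ^ 2)).
  - replace ((INR n * d) ^ 3 / (50 * INR n ^ 2)) with (INR n * (d ^ 3 / 50)) by (field; lra).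
    pose proof (Rmax_l M 1). lra.
  - unfold Rdiv. apply Rle_trans with ((q ^ n) ^ 3 * / (50 * INR n ^ 2)).
    + apply Rmult_le_compat_r; [left; apply Rinv_0_lt_compat; nra|lra].
    + apply Rmult_le_compat_l; [apply pow_le; lra|]. apply Rinv_le_contravar; lra.
Qed.

Lemma block_sum_unbounded s M : 0 < s < 1 ->
  exists L, (2 <= L)%nat /\ M <= 2 ^ L * rpow (block_bcoef L) s.
Proof.
  intros Hs.
  assert (Hq : 1 < rpow 2 (1 - s)).
  { rewrite rpow_pos by lra. rewrite <- (Rpower_O 2) at 1 by lra. apply Rpower_lt; lra. }
  destruct (geometric_beats_quadratic (rpow 2 (1 - s)) M Hq) as [L [HL HM]].
  exists L. split; [exact HL|]. eapply Rle_trans; [exact HM|].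
  apply block_sum_ge_geometric; [exact Hs|lia].
Qed.

(** * The curve *)

Definition bump (i : nat) (t : R) : R := Rabs (sin (PI * 2 ^ i * t)) / (PI * 2 ^ i).

Lemma bump_scale_pos i : 0 < PI * 2 ^ i.
Proof. apply Rmult_lt_0_compat; [apply PI_RGT_0|apply pow_lt; lra]. Qed.

Lemma bump_lipschitz i s t : Rabs (bump i s - bump i t) <= Rabs (s - t).
Proof.
  unfold bump. pose proof (bump_scale_pos i).
  replace (Rabs (sin (PI * 2 ^ i * s)) / (PI * 2 ^ i) - Rabs (sin (PI * 2 ^ i * t)) / (PI * 2 ^ i))
    with ((Rabs (sin (PI * 2 ^ i * s)) - Rabs (sin (PI * 2 ^ i * t))) / (PI * 2 ^ i))
      by (unfold Rdiv; ring).
  unfold Rdiv. rewrite Rabs_mult, (Rabs_right (/ _)) by (left; apply Rinv_0_lt_compat; lra).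
  apply Rmult_le_reg_r with (PI * 2 ^ i); [lra|].
  rewrite Rmult_assoc, Rinv_l by lra. rewrite Rmult_1_r.
  eapply Rle_trans; [apply Rabs_triang_inv2|]. eapply Rle_trans; [apply sin_lipschitz|].
  replace (PI * 2 ^ i * s - PI * 2 ^ i * t) with ((PI * 2 ^ i) * (s - t)) by ring.
  rewrite Rabs_mult, (Rabs_right (PI * 2 ^ i)) by lra. lra.
Qed.

Lemma bump_bounds i t : 0 <= bump i t <= 1.
Proof.
  unfold bump. pose proof (bump_scale_pos i). pose proof (SIN_bound (PI * 2 ^ i * t)).
  assert (Rabs (sin (PI * 2 ^ i * t)) <= 1) by (apply Rabs_le; lra).
  assert (1 <= 2 ^ i) by (apply pow_R1_Rle; lra). pose proof PI_gt3.
  assert (PI * 1 <= PI * 2 ^ i) by (apply Rmult_le_compat_l; lra).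
  split.
  - apply Rmult_le_pos; [apply Rabs_pos|left; apply Rinv_0_lt_compat; lra].
  - apply Rmult_le_reg_r with (PI * 2 ^ i); [lra|]. unfold Rdiv.
    rewrite Rmult_assoc, Rinv_l by lra. lra.
Qed.

(* Coordinate 0 records the parameter, so distances along the curve control parameter
   distances; coordinate i carries an oscillation of period 2^-i and height
   a_i / (PI 2^i). *)
Definition curve (p : R) (t : R) : seqR :=
  fun i => if (i =? 0)%nat then t else acoef p i * bump i t.

Definition lip_weight (i : nat) : R := if (i =? 0)%nat then 1 else bcoef i.

Lemma lip_weight_partial_sum n : sum_f_R0 lip_weight n <= 3/2.
Proof.
  assert (E : sum_f_R0 lip_weight n = 1 + sum_f_R0 bcoef n).
  { induction n; simpl. - unfold lip_weight, bcoef; simpl; ring. - rewrite IHn.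
      unfold lip_weight; simpl. ring. }
  rewrite E. pose proof (bcoef_partial_sum_le n). lra.
Qed.

Lemma curve_term_diff_le p s t i : 1 <= p ->
  lp_term p (vsub (curve p s) (curve p t)) i <= lip_weight i * rpow (Rabs (s - t)) p.
Proof.
  intros Hp. unfold lp_term, vsub, curve, lip_weight. destruct (i =? 0)%nat; [lra|].
  rewrite <- Rmult_minus_distr_l. pose proof (acoef_bounds p i Hp).
  rewrite Rabs_mult, (Rabs_right (acoef p i)) by lra.
  rewrite <- (acoef_pow p i) by lra. rewrite <- rpow_mul by (try apply Rabs_pos; lra).
  apply rpow_le; [lra|]. split; [apply Rmult_le_pos; [lra|apply Rabs_pos]|].
  apply Rmult_le_compat_l; [lra|apply bump_lipschitz].
Qed.

Lemma curve_term_le p t i : 1 <= p -> Rabs t <= 1 -> lp_term p (curve p t) i <= lip_weight i.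
Proof.
  intros Hp Ht. unfold lp_term, curve, lip_weight. destruct (i =? 0)%nat.
  - rewrite <- (rpow_1 1) by lra. apply Rle_trans with (rpow 1 p).
    + apply rpow_le; [lra|split; [apply Rabs_pos|lra]].
    + rewrite !rpow_pos by lra. unfold Rpower. rewrite ln_1, !Rmult_0_r, exp_0. lra.
  - pose proof (acoef_bounds p i Hp). pose proof (bump_bounds i t).
    rewrite <- (acoef_pow p i) by lra. apply rpow_le; [lra|].
    rewrite Rabs_mult, !Rabs_right by lra. split; [apply Rmult_le_pos; lra|].
    rewrite <- (Rmult_1_r (acoef p i)) at 2. apply Rmult_le_compat_l; lra.
Qed.

Lemma curve_in_lp p t : 1 <= p -> 0 <= t <= 1 -> in_lp p (curve p t).
Proof.
  intros Hp Ht. apply (in_lp_of_bounded_partial p (curve p t) (3/2)). intros n.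
  eapply Rle_trans; [|apply (lip_weight_partial_sum n)]. apply sum_Rle. intros i _.
    apply curve_term_le; auto.
  apply Rabs_le; lra.
Qed.

Lemma curve_lipschitz p s t : 1 <= p -> 0 <= s <= 1 -> 0 <= t <= 1 ->
  ldist p (curve p s) (curve p t) <= 2 * Rabs (s - t).
Proof.
  intros Hp Hs Ht. apply ldist_le_of_sum; try lra; try apply curve_in_lp; auto.
  - pose proof (Rabs_pos (s - t)); lra.
  - destruct (in_lp_of_bounded_partial p (vsub (curve p s) (curve p t))
      (3/2 * rpow (Rabs (s - t)) p)) as [_ [H _]].
    + intros n. eapply Rle_trans.
      * apply (sum_Rle _ (fun i => lip_weight i * rpow (Rabs (s - t)) p)). intros i _.
          apply curve_term_diff_le; auto.
      * assert (E : forall m, sum_f_R0 (fun i => lip_weight i * rpow (Rabs (s - t)) p) m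
                   = sum_f_R0 lip_weight m * rpow (Rabs (s - t)) p).
        { induction m; simpl; [ring|rewrite IHm; ring]. }
        rewrite E. apply Rmult_le_compat_r; [apply rpow_ge0|apply lip_weight_partial_sum].
    + eapply Rle_trans; [exact H|]. rewrite rpow_mul by (try apply Rabs_pos; lra).
      pose proof (rpow2_ge2 p Hp). pose proof (rpow_ge0 (Rabs (s - t)) p). nra.
Qed.

Lemma curve_coord0 p t : curve p t 0%nat = t.
Proof. reflexivity. Qed.

Lemma curve_is_curve_param p : 1 <= p -> is_curve_param p (curve p).
Proof.
  intros Hp. split.
  - intros t Ht. apply curve_in_lp; auto.
  - intros t Ht eps Heps. exists (eps / 2). split; [lra|].
    intros s Hs Hst. eapply Rle_lt_trans; [apply curve_lipschitz; auto|]. lra.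
Qed.

Lemma curve_H1_finite p : 1 <= p -> er_lt (H1 p (image01 (curve p))) PInf.
Proof.
  intros Hp. apply (H1_lipschitz_image_finite p 2); try lra.
  - intros t Ht. apply curve_in_lp; auto.
  - intros s t Hs Ht. apply curve_lipschitz; auto.
Qed.

Lemma curve_image_in_lp p : 1 <= p -> forall x, image01 (curve p) x -> in_lp p x.
Proof. intros Hp x [t [Ht ->]]. apply curve_in_lp; auto. Qed.

(** * Flatness at every scale *)

(* The points (t1, 0), (t1 + l, h), (t1 + 2l, 0) in coordinates 0 and m are not all within
   h/4 of a line: eliminating its parameters s1, s2, s3 gives X W = Y U with X, W small
   and Y, U large. *)
Lemma tent_far_from_line a0 v0 am vm s1 s2 s3 t1 l h d :
  0 < h -> h <= l -> d <= h / 4 ->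
  Rabs (t1 - (a0 + s1 * v0)) < d -> Rabs (t1 + l - (a0 + s2 * v0)) < d ->
  Rabs (t1 + 2 * l - (a0 + s3 * v0)) < d ->
  Rabs (0 - (am + s1 * vm)) < d -> Rabs (h - (am + s2 * vm)) < d ->
  Rabs (0 - (am + s3 * vm)) < d -> False.
Proof.
  intros Hh Hl Hd H1 H2 H3 H4 H5 H6.
  apply Rabs_def2 in H1; apply Rabs_def2 in H2; apply Rabs_def2 in H3;
  apply Rabs_def2 in H4; apply Rabs_def2 in H5; apply Rabs_def2 in H6.
  set (X := (s2 - (s1 + s3) / 2) * v0).
  set (Y := (s2 - (s1 + s3) / 2) * vm).
  set (U := (s3 - s1) * v0).
  set (W := (s3 - s1) * vm).
  assert (E : X * W = Y * U) by (unfold X, Y, U, W; ring).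
  assert (HX : Rabs X < 2 * d).
  { apply Rabs_def1; unfold X; lra. }
  assert (HW : Rabs W < 2 * d).
  { apply Rabs_def1; unfold W; lra. }
  assert (HY : Y > h / 2) by (unfold Y; lra).
  assert (HU : U > 3 * h / 2) by (unfold U; lra).
  assert (Rabs (X * W) < h * h / 4).
  { rewrite Rabs_mult. assert (0 <= d) by (pose proof (Rabs_pos X); lra).
    pose proof (Rabs_pos X); pose proof (Rabs_pos W).
    assert (Rabs X * Rabs W <= 2 * d * (2 * d)).
    { apply Rmult_le_compat; lra. }
    nra. }
  rewrite E in H. rewrite Rabs_right in H by nra. nra.
Qed.

Lemma bump_at_dyadic m J : bump m (INR J / 2 ^ m) = 0.
Proof.
  unfold bump. assert (0 < 2 ^ m) by (apply pow_lt; lra).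
  replace (PI * 2 ^ m * (INR J / 2 ^ m)) with (IZR (Z.of_nat J) * PI)
    by (rewrite <- INR_IZR_INZ; field; lra).
  rewrite sin_eq_0_1 by (eexists; reflexivity). rewrite Rabs_R0. unfold Rdiv; ring.
Qed.

Lemma bump_at_dyadic_mid m J : bump m (INR J / 2 ^ m + / (2 * 2 ^ m)) = / (PI * 2 ^ m).
Proof.
  unfold bump. assert (0 < 2 ^ m) by (apply pow_lt; lra). pose proof PI_RGT_0.
  replace (PI * 2 ^ m * (INR J / 2 ^ m + / (2 * 2 ^ m))) with (IZR (Z.of_nat J) * PI + PI / 2)
    by (rewrite <- INR_IZR_INZ; field; lra).
  set (z := IZR (Z.of_nat J) * PI + PI / 2).
  assert (Hc : cos z = 0) by (apply cos_eq_0_1; eexists; reflexivity).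
  pose proof (sin2_cos2 z). rewrite Hc in H1. unfold Rsqr in H1.
  assert (Rabs (sin z) = 1).
  { pose proof (Rabs_pos (sin z)). assert (Rabs (sin z) * Rabs (sin z) = 1).
    { rewrite <- Rabs_mult. rewrite Rabs_right; lra. }
    nra. }
  rewrite H2. unfold Rdiv; ring.
Qed.

Lemma bump_at_next_dyadic m J : bump m (INR J / 2 ^ m + 2 * / (2 * 2 ^ m)) = 0.
Proof.
  replace (INR J / 2 ^ m + 2 * / (2 * 2 ^ m)) with (INR (S J) / 2 ^ m).
  - apply bump_at_dyadic.
  - assert (0 < 2 ^ m) by (apply pow_lt; lra). rewrite S_INR. field. lra.
Qed.

Lemma acoef_pos p m : (1 <= m)%nat -> 0 < acoef p m.
Proof.
  intros Hm. apply rpow_gt0. unfold bcoef. destruct (Nat.eqb_spec m 0); [lia|].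
  pose proof (dyadic_weight_pos m); lra.
Qed.

Lemma bump_height_le_half_cell p m : 1 <= p -> (1 <= m)%nat ->
  0 < acoef p m / (PI * 2 ^ m) <= / (2 * 2 ^ m).
Proof.
  intros Hp Hm. assert (H2m : 0 < 2 ^ m) by (apply pow_lt; lra). pose proof PI_gt3.
  pose proof (acoef_pos p m Hm). pose proof (acoef_bounds p m Hp). split.
  - apply Rdiv_lt_0_compat; nra.
  - apply Rle_trans with (/ (PI * 2 ^ m)).
    + unfold Rdiv. rewrite <- (Rmult_1_l (/ (PI * 2 ^ m))) at 2.
      apply Rmult_le_compat_r; [left; apply Rinv_0_lt_compat|]; nra.
    + apply Rinv_le_contravar; nra.
Qed.

Lemma dyadic_tent_far_from_lines p m J a v : 1 <= p -> (1 <= m)%nat -> (J + 1 <= 2 ^ m)%nat ->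
  in_lp p a -> in_lp p v ->
  exists t, INR J / 2 ^ m <= t <= (INR J + 1) / 2 ^ m /\
    forall s, acoef p m / (PI * 2 ^ m) / 4 <= ldist p (curve p t) (vadd a (vscale s v)).
Proof.
  intros Hp Hm HJ Ha Hv.
  assert (H2m : 0 < 2 ^ m) by (apply pow_lt; lra).
  assert (HJr : INR J + 1 <= 2 ^ m).
  { apply le_INR in HJ. rewrite plus_INR, INR_pow2 in HJ. exact HJ. }
  pose proof (pos_INR J).
  set (t1 := INR J / 2 ^ m). set (l := / (2 * 2 ^ m)). set (h := acoef p m / (PI * 2 ^ m)).
  assert (Ht1 : 0 <= t1) by (apply Rmult_le_pos; [lra|left; apply Rinv_0_lt_compat; lra]).
  assert (Ht3 : t1 + 2 * l = (INR J + 1) / 2 ^ m) by (unfold t1, l; field; lra).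
  assert (Ht3' : (INR J + 1) / 2 ^ m <= 1).
  { apply Rmult_le_reg_r with (2 ^ m); [lra|]. unfold Rdiv.
    rewrite Rmult_assoc, Rinv_l by lra. lra. }
  destruct (bump_height_le_half_cell p m Hp Hm) as [Hh Hhl]. fold h l in Hh, Hhl.
  assert (Hcm : forall t, curve p t m = acoef p m * bump m t).
  { intros t. unfold curve. destruct (Nat.eqb_spec m 0); [lia|reflexivity]. }
  apply NNPP. intros Hno.
  assert (Hex : forall t, t1 <= t <= t1 + 2 * l -> exists s,
            forall i, Rabs (curve p t i - (a i + s * v i)) < h / 4).
  { intros t Htr. apply NNPP. intros Hn. apply Hno. exists t. split; [lra|].
    intros s. apply Rnot_lt_le. intros Hlt. apply Hn. exists s. intros i.
    eapply Rle_lt_trans; [|exact Hlt]. apply (coord_le_ldist p _ (vadd a (vscale s v)) i); try lra.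
    - apply curve_in_lp; lra.
    - apply in_lp_add, in_lp_scale; auto; lra. }
  destruct (Hex t1 ltac:(lra)) as [s1 Hs1].
  destruct (Hex (t1 + l) ltac:(lra)) as [s2 Hs2].
  destruct (Hex (t1 + 2 * l) ltac:(lra)) as [s3 Hs3].
  apply (tent_far_from_line (a 0%nat) (v 0%nat) (a m) (v m) s1 s2 s3 t1 l h (h / 4)); try lra;
    [apply (Hs1 0%nat)|apply (Hs2 0%nat)|apply (Hs3 0%nat)|..].
  - specialize (Hs1 m). rewrite Hcm in Hs1. unfold t1 in Hs1.
    rewrite bump_at_dyadic, Rmult_0_r in Hs1. exact Hs1.
  - specialize (Hs2 m). rewrite Hcm in Hs2. unfold t1, l in Hs2.
    rewrite bump_at_dyadic_mid in Hs2. exact Hs2.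
  - specialize (Hs3 m). rewrite Hcm in Hs3. unfold t1, l in Hs3.
    rewrite bump_at_next_dyadic, Rmult_0_r in Hs3. exact Hs3.
Qed.

Lemma dyadic_cell_near m tau : 0 <= tau <= 1 ->
  exists J, (J + 1 <= 2 ^ m)%nat /\ forall t, INR J / 2 ^ m <= t <= (INR J + 1) / 2 ^ m ->
    0 <= t <= 1 /\ Rabs (t - tau) <= 2 / 2 ^ m.
Proof.
  intros Htau. assert (H2m : 0 < 2 ^ m) by (apply pow_lt; lra).
  destruct (floor_nat (tau * 2 ^ m)) as [n [Hn1 Hn2]]; [nra|].
  assert (Hnm : INR n <= 2 ^ m) by nra.
  assert (HJ : INR (n - 1) <= INR n /\ INR n - 1 <= INR (n - 1)).
  { destruct n; [simpl; lra|]. replace (S n - 1)%nat with n by lia. rewrite S_INR. lra. }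
  assert (Hn : (n <= 2 ^ m)%nat) by (apply INR_le; rewrite INR_pow2; lra).
  assert (1 <= 2 ^ m)%nat by (apply Nat.pow_le_mono_r with (a := 2%nat) (b := 0%nat); lia).
  assert (HJm : INR (n - 1) + 1 <= 2 ^ m).
  { rewrite <- INR_pow2, <- S_INR. apply le_INR. lia. }
  exists (n - 1)%nat. split; [lia|]. intros t [Ht1 Ht2].
  assert (Hscale : forall x, x / 2 ^ m * 2 ^ m = x) by (intros; field; lra).
  apply (Rmult_le_compat_r (2 ^ m)) in Ht1, Ht2; try lra. rewrite Hscale in Ht1, Ht2.
  pose proof (pos_INR (n - 1)). split; [split|].
  - apply Rmult_le_reg_r with (2 ^ m); lra.
  - apply Rmult_le_reg_r with (2 ^ m); lra.
  - apply Rmult_le_reg_r with (2 ^ m); [lra|]. rewrite Hscale.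
    rewrite <- (Rabs_right (2 ^ m)) at 1 by lra. rewrite <- Rabs_mult.
    apply Rabs_le. lra.
Qed.

Lemma curve_far_from_lines_near p m tau a v : 1 <= p -> (1 <= m)%nat -> 0 <= tau <= 1 ->
  in_lp p a -> in_lp p v ->
  exists t, 0 <= t <= 1 /\ Rabs (t - tau) <= 2 / 2 ^ m /\
    forall s, acoef p m / (PI * 2 ^ m) / 4 <= ldist p (curve p t) (vadd a (vscale s v)).
Proof.
  intros Hp Hm Htau Ha Hv.
  destruct (dyadic_cell_near m tau Htau) as [J [HJ Hcell]].
  destruct (dyadic_tent_far_from_lines p m J a v Hp Hm HJ Ha Hv) as [t [Ht Hfar]].
  exists t. destruct (Hcell t Ht). auto.
Qed.

Lemma curve_beta_term_lower p A k tau r :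
  1 <= p -> 1 < A -> (1 <= k)%nat -> 0 <= tau <= 1 -> 0 < r ->
  rpow (acoef p (k + 2) / (64 * PI * A)) r * (A / 2 ^ k) <=
  rpow (beta p (image01 (curve p)) (cball p (curve p tau) (A / 2 ^ k))) r *
    er_real (diam p (cball p (curve p tau) (A / 2 ^ k))).
Proof.
  intros Hp HA Hk Htau Hr.
  assert (H2k : 0 < 2 ^ k) by (apply pow_lt; lra).
  assert (E2m : 2 ^ (k + 2) = 4 * 2 ^ k) by (rewrite pow_add; simpl; ring).
  pose proof PI_gt3. pose proof (acoef_bounds p (k + 2) Hp).
  set (s0 := acoef p (k + 2) / (PI * 2 ^ (k + 2)) / 4).
  replace (acoef p (k + 2) / (64 * PI * A)) with (s0 / (4 * (A / 2 ^ k)))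
    by (unfold s0; rewrite E2m; field; repeat split; lra).
  apply beta_term_lower; auto.
  - apply Rdiv_lt_0_compat; lra.
  - unfold s0. rewrite E2m. apply Rmult_le_pos; [|lra].
    apply Rmult_le_pos; [lra|left; apply Rinv_0_lt_compat; nra].
  - apply curve_in_lp; auto.
  - exists tau; auto.
  - apply curve_image_in_lp; auto.
  - intros a v Ha Hv.
    destruct (curve_far_from_lines_near p (k + 2) tau a v Hp ltac:(lia) Htau Ha Hv)
      as [t [Ht [Htt Hfar]]].
    exists (curve p t). split; [exists t; auto|split; [split|exact Hfar]].
    + apply curve_in_lp; auto.
    + eapply Rle_trans; [apply curve_lipschitz; auto|]. rewrite E2m in Htt.
      apply Rle_trans with (1 / 2 ^ k);
        [replace (1 / 2 ^ k) with (2 * (2 / (4 * 2 ^ k))) by (field; lra); lra|].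
      apply Rmult_le_compat_r; [left; apply Rinv_0_lt_compat|]; lra.
Qed.

(** * Divergence of the Jones sum *)

Definition grid_point (k j : nat) : R := INR j * 2 / 2 ^ k.

(* The net X_k must contain, for each j < 2^(k-1), a point whose parameter lies within
   2^-k of the grid point 2j/2^k; distinct j give distinct points. *)
Definition net_choice_spec p (X : Z -> seqR -> Prop) (k j : nat) (x : seqR) : Prop :=
  X (Z.of_nat k) x /\
  exists tau, 0 <= tau <= 1 /\ x = curve p tau /\ Rabs (tau - grid_point k j) < / 2 ^ k.

Definition net_choice p X k j : seqR := epsilon (inhabits vzero) (net_choice_spec p X k j).

Lemma grid_point_bounds k j : (1 <= k)%nat -> (j < 2 ^ (k - 1))%nat -> 0 <= grid_point k j <= 1.
Proof.
  intros Hk Hj. unfold grid_point. rewrite (pow2_pred k Hk).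
  assert (H2 : 0 < 2 ^ (k - 1)) by (apply pow_lt; lra).
  assert (INR j + 1 <= 2 ^ (k - 1)).
  { assert (H : (S j <= 2 ^ (k - 1))%nat) by lia. apply le_INR in H.
    rewrite S_INR, INR_pow2 in H. exact H. }
  pose proof (pos_INR j). split.
  - apply Rmult_le_pos; [lra|left; apply Rinv_0_lt_compat; lra].
  - apply Rmult_le_reg_r with (2 * 2 ^ (k - 1)); [lra|]. unfold Rdiv.
    rewrite Rmult_assoc, Rinv_l by lra. lra.
Qed.

Lemma net_choice_correct p A X k j : 1 <= p -> is_MRF p (image01 (curve p)) A X -> (1 <= k)%nat ->
  (j < 2 ^ (k - 1))%nat -> net_choice_spec p X k j (net_choice p X k j).
Proof.
  intros Hp [HA [Hnest Hnet]] Hk Hj. unfold net_choice. apply epsilon_spec.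
  pose proof (grid_point_bounds k j Hk Hj) as Hu.
  specialize (Hnet (Z.of_nat k)). rewrite powerRZ2_neg_nat in Hnet.
  destruct (net_near p _ _ _ (curve p (grid_point k j)) Hnet) as [x [Hx Hd]].
  { exists (grid_point k j); auto. }
  destruct Hnet as [Hsub _]. destruct (Hsub x Hx) as [tau [Htau ->]].
  exists (curve p tau). split; [exact Hx|]. exists tau. split; [exact Htau|split; [reflexivity|]].
  pose proof (coord_le_ldist p (curve p (grid_point k j)) (curve p tau) 0%nat ltac:(lra)
    (curve_in_lp p _ Hp Hu) (curve_in_lp p _ Hp Htau)) as Hc.
  rewrite !curve_coord0 in Hc. rewrite Rabs_minus_sym. lra.
Qed.

Lemma net_choice_inj p A X k j1 j2 : 1 <= p -> is_MRF p (image01 (curve p)) A X -> (1 <= k)%nat ->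
  (j1 < 2 ^ (k - 1))%nat -> (j2 < 2 ^ (k - 1))%nat -> net_choice p X k j1 = net_choice p X k j2 ->
    j1 = j2.
Proof.
  intros Hp HM Hk Hj1 Hj2 E.
  destruct (net_choice_correct p A X k j1 Hp HM Hk Hj1) as [_ [t1 [_ [E1 H1]]]].
  destruct (net_choice_correct p A X k j2 Hp HM Hk Hj2) as [_ [t2 [_ [E2 H2]]]].
  rewrite E in E1. rewrite E1 in E2.
  assert (t1 = t2) by (apply (f_equal (fun x => x 0%nat)) in E2; exact E2). subst t2.
  assert (H2k : 0 < 2 ^ k) by (apply pow_lt; lra).
  assert (Hdu : Rabs (grid_point k j1 - grid_point k j2) < 2 / 2 ^ k).
  { replace (grid_point k j1 - grid_point k j2)
      with (- (t1 - grid_point k j1) + (t1 - grid_point k j2)) by ring.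
    eapply Rle_lt_trans; [apply Rabs_triang|]. rewrite Rabs_Ropp. unfold Rdiv. lra. }
  unfold grid_point in Hdu.
  replace (INR j1 * 2 / 2 ^ k - INR j2 * 2 / 2 ^ k) with ((INR j1 - INR j2) * (2 / 2 ^ k))
    in Hdu by (field; lra).
  rewrite Rabs_mult, (Rabs_right (2 / 2 ^ k)) in Hdu
    by (apply Rle_ge, Rmult_le_pos; [lra|left; apply Rinv_0_lt_compat; lra]).
  assert (Habs : Rabs (INR j1 - INR j2) < 1).
  { assert (0 < 2 / 2 ^ k) by (apply Rmult_lt_0_compat; [lra|apply Rinv_0_lt_compat; lra]). nra. }
  destruct (Nat.lt_total j1 j2) as [Hlt|[Heq|Hlt]]; [|exact Heq|].
  - apply lt_INR in Hlt. exfalso.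
      assert (INR (S j1) <= INR j2) by (apply le_INR; apply INR_lt in Hlt; lia).
    rewrite S_INR in H. apply Rabs_def2 in Habs. lra.
  - apply lt_INR in Hlt. exfalso.
      assert (INR (S j2) <= INR j1) by (apply le_INR; apply INR_lt in Hlt; lia).
    rewrite S_INR in H. apply Rabs_def2 in Habs. lra.
Qed.

Lemma S_term_net_choice_lower p A X r k j :
  1 <= p -> is_MRF p (image01 (curve p)) A X -> (1 <= k)%nat ->
  (j < 2 ^ (k - 1))%nat -> 0 < r ->
  rpow (acoef p (k + 2) / (64 * PI * A)) r * (A / 2 ^ k) <= S_term p (image01 (curve p)) A r
    (Z.of_nat k, net_choice p X k j).
Proof.
  intros Hp HM Hk Hj Hr.
  destruct (net_choice_correct p A X k j Hp HM Hk Hj) as [_ [tau [Htau [E _]]]].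
  unfold S_term. simpl fst; simpl snd. rewrite powerRZ2_neg_nat, E.
  apply curve_beta_term_lower; auto. destruct HM as [HA _]; exact HA.
Qed.

Definition net_level p X k : list (Z * seqR) := map (fun j => (Z.of_nat k,
  net_choice p X k j)) (seq 0 (2 ^ (k - 1))).

Lemma net_level_sum_lower p A X r k :
  1 <= p -> is_MRF p (image01 (curve p)) A X -> (1 <= k)%nat -> 0 < r ->
  A / 2 * rpow (acoef p (k + 2) / (64 * PI * A)) r <= lsum (map (S_term p (image01 (curve p)) A r)
    (net_level p X k)).
Proof.
  intros Hp HM Hk Hr.
  eapply Rle_trans;
    [|apply (lsum_lower_const _ _ (rpow (acoef p (k + 2) / (64 * PI * A)) r * (A / 2 ^ k)))].
  - unfold net_level. rewrite length_map, length_seq, INR_pow2.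
    rewrite (pow2_pred k Hk). assert (0 < 2 ^ (k - 1)) by (apply pow_lt; lra).
    right. field. lra.
  - intros x Hx. unfold net_level in Hx. apply in_map_iff in Hx. destruct Hx as [j [<- Hj]].
    apply in_seq in Hj. apply S_term_net_choice_lower; auto. lia.
Qed.

Fixpoint net_levels p X (k0 n : nat) : list (Z * seqR) :=
  match n with
  | O => nil
  | S n' => net_level p X k0 ++ net_levels p X (S k0) n'
  end.

Lemma in_net_levels p X k0 n x : In x (net_levels p X k0 n) ->
  exists k j, (k0 <= k)%nat /\ (k < k0 + n)%nat /\ (j < 2 ^ (k - 1))%nat /\
    x = (Z.of_nat k, net_choice p X k j).
Proof.
  revert k0. induction n; intros k0 Hx; simpl in Hx; [contradiction|].
  apply in_app_or in Hx. destruct Hx as [Hx|Hx].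
  - unfold net_level in Hx. apply in_map_iff in Hx. destruct Hx as [j [<- Hj]]. apply in_seq in Hj.
    exists k0, j. repeat split; try lia.
  - destruct (IHn (S k0) Hx) as [k [j [H1 [H2 [H3 H4]]]]]. exists k, j. repeat split; auto; lia.
Qed.

Lemma net_levels_NoDup p A X k0 n : 1 <= p -> is_MRF p (image01 (curve p)) A X -> (1 <= k0)%nat ->
  NoDup (net_levels p X k0 n).
Proof.
  intros Hp HM. revert k0. induction n; intros k0 Hk0; simpl; [constructor|].
  apply NoDup_app.
  - unfold net_level. apply NoDup_map_NoDup_ForallPairs; [|apply seq_NoDup].
    intros j1 j2 Hj1 Hj2 E. apply in_seq in Hj1; apply in_seq in Hj2.
    injection E as E. apply (net_choice_inj p A X k0 j1 j2); auto; lia.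
  - apply IHn; lia.
  - intros x Hx Hx'. unfold net_level in Hx. apply in_map_iff in Hx. destruct Hx as [j [<- _]].
    destruct (in_net_levels p X (S k0) n _ Hx') as [k [j' [H1 [_ [_ H4]]]]].
    injection H4 as H4 _. apply Nat2Z.inj in H4. lia.
Qed.

Lemma net_levels_in_family p A X k0 n :
  1 <= p -> is_MRF p (image01 (curve p)) A X -> (1 <= k0)%nat ->
  Forall (fun kx : Z * seqR => X (fst kx) (snd kx)) (net_levels p X k0 n).
Proof.
  intros Hp HM Hk0. apply Forall_forall. intros x Hx.
  destruct (in_net_levels p X k0 n x Hx) as [k [j [H1 [_ [H3 ->]]]]]. simpl.
  destruct (net_choice_correct p A X k j Hp HM ltac:(lia) H3) as [H _]. exact H.
Qed.

Lemma net_levels_sum_lower p X (f : Z * seqR -> R) k0 n V :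
  (forall k, (k0 <= k)%nat -> (k < k0 + n)%nat -> V <= lsum (map f (net_level p X k))) ->
  INR n * V <= lsum (map f (net_levels p X k0 n)).
Proof.
  revert k0. induction n; intros k0 H; [unfold lsum; simpl; lra|].
  cbn [net_levels]. rewrite map_app, lsum_app, S_INR.
  assert (V <= lsum (map f (net_level p X k0))) by (apply H; lia).
  assert (INR n * V <= lsum (map f (net_levels p X (S k0) n))) by (apply IHn; intros; apply H; lia).
  lra.
Qed.

Lemma net_levels_block_sum_lower p A X r L : 1 <= p -> is_MRF p (image01 (curve p)) A X ->
  0 < r -> (2 <= L)%nat ->
  2 ^ L * (A / 2 * rpow (/ (64 * PI * A)) r * rpow (block_bcoef L) (r / p))
  <= lsum (map (S_term p (image01 (curve p)) A r) (net_levels p X (2 ^ L - 2) (2 ^ L))).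
Proof.
  intros Hp HM Hr HL. assert (HA : 1 < A) by (destruct HM; auto). pose proof PI_gt3.
  assert (Hb : 0 < block_bcoef L).
  { unfold block_bcoef. pose proof (pos_INR L). assert (0 < 2 ^ L) by (apply pow_lt; lra).
    apply Rinv_0_lt_compat. repeat apply Rmult_lt_0_compat; lra. }
  pose proof (pow2_ge4 L HL) as H4.
  replace (2 ^ L) with (INR (2 ^ L)) at 1 by (rewrite pow_INR; simpl; f_equal; ring).
  apply net_levels_sum_lower. intros k Hk1 Hk2.
  eapply Rle_trans; [|apply net_level_sum_lower; auto; lia].
  rewrite (acoef_on_block p L k) by lia.
  unfold Rdiv. rewrite rpow_mul by (try apply rpow_ge0; left; apply Rinv_0_lt_compat; nra).
  rewrite rpow_rpow, (Rmult_comm (/ p)) by lra. right. ring.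
Qed.

Lemma S_esum_infinite p A X r : 1 < p -> is_MRF p (image01 (curve p)) A X -> 0 < r < p ->
  esum (fun kx : Z * seqR => X (fst kx) (snd kx))
    (fun kx => Fin (S_term p (image01 (curve p)) A r kx)) = PInf.
Proof.
  intros Hp HM Hr. assert (HA : 1 < A) by (destruct HM; auto). pose proof PI_gt3.
  set (K := A / 2 * rpow (/ (64 * PI * A)) r).
  assert (HK : 0 < K).
  { apply Rmult_lt_0_compat; [lra|apply rpow_gt0, Rinv_0_lt_compat; nra]. }
  assert (Hs : 0 < r / p < 1).
  { split; [apply Rdiv_lt_0_compat; lra|]. apply Rmult_lt_reg_r with p; [lra|].
    unfold Rdiv. rewrite Rmult_assoc, Rinv_l by lra. lra. }
  apply esum_Fin_unbounded. intros M.
  destruct (block_sum_unbounded (r / p) ((M + 1) / K) Hs) as [L [HL HLb]].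
  pose proof (pow2_ge4 L HL) as H4.
  exists (net_levels p X (2 ^ L - 2) (2 ^ L)). split; [|split].
  - apply (net_levels_NoDup p A X); auto; [lra|lia].
  - apply (net_levels_in_family p A X); auto; [lra|lia].
  - eapply Rlt_le_trans; [|apply net_levels_block_sum_lower; auto; lra].
    assert (HKL : M + 1 <= K * (2 ^ L * rpow (block_bcoef L) (r / p))).
    { replace (M + 1) with (K * ((M + 1) / K)) by (field; lra). apply Rmult_le_compat_l; lra. }
    unfold K in HKL. lra.
Qed.

Theorem mainTheorem9 :
  forall p : R, 1 < p ->
  exists g : R -> seqR,
    is_curve_param p g /\
    er_lt (H1 p (image01 g)) PInf /\
    forall (A : R) (X : Z -> seqR -> Prop),
      is_MRF p (image01 g) A X ->
      forall eps : R, 0 < eps < p ->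
        S_val p (image01 g) (p - eps) A X = PInf.
Proof.
  intros p Hp. exists (curve p). split; [|split].
  - apply curve_is_curve_param; lra.
  - apply curve_H1_finite; lra.
  - intros A X HM eps Heps. rewrite S_val_S_term, S_esum_infinite; auto; [|lra].
    apply er_add_PInf_r.
Qed.
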